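(* Let $A_1,B_1,A_2,B_2>0$ and let $M\subset\mathbb C^2$ be the ellipsoid $\{A_1x_1^2+B_1y_1^2+A_2x_2^2+B_2y_2^2=1\}$, where $z_j=x_j+iy_j$. Equip $M$ with the CR structure induced from $\mathbb C^2$ and the contact form $\theta=\frac{i}{2}(\bar\partial u-\partial u)|_M$, where $u=A_1x_1^2+B_1y_1^2+A_2x_2^2+B_2y_2^2-1$. Then the Tanaka–Webster curvature $R$ of $(M,\theta)$ is strictly positive at every point of $M$.
   Context: Take $Z_1$ to be a frame of $T_{1,0}M$, $\{\theta,\theta^1,\theta^{\bar1}\}$ the coframe dual to $\{T,Z_1,Z_{\bar1}\}$ with $T$ the Reeb field of $\theta$, and $d\theta=ih_{1\bar1}\theta^1\wedge\theta^{\bar1}$ with $h_{1\bar1}>0$. The Tanaka–Webster connection form $\theta_1{}^1$ is determined by $d\theta^1=\theta^1\wedge\theta_1{}^1+\theta\wedge\tau^1$, $\tau^1\equiv0 \bmod \theta^{\bar1}$, $\theta_1{}^1+\theta_{\bar1}{}^{\bar1}=h^{1\bar1}dh_{1\bar1}$ (with $h^{1\bar1}=1/h_{1\bar1}$). The Webster curvature $R$ is defined by $d\theta_1{}^1\equiv R\,h_{1\bar1}\theta^1\wedge\theta^{\bar1}\pmod\theta$; it depends only on $(J,\theta)$ and not on the choice of frame. *)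

From Stdlib Require Import Reals.
From Coquelicot Require Import Coquelicot.
Open Scope C_scope.

(** Points of C^2 = R^4, in real coordinates (x1, y1, x2, y2), z_j = x_j + i y_j. *)
Definition pt : Type := (R * R * R * R)%type.

(** real coordinate k (0:x1, 1:y1, 2:x2, 3:y2) *)
Definition coord (p : pt) (k : nat) : R :=
  match k with
  | 0 => (fst (fst (fst p))) | 1 => (snd (fst (fst p))) | 2 => (snd (fst p)) | _ => (snd p) end.

Definition upd (p : pt) (k : nat) (t : R) : pt :=
  match k with
  | 0 => (t, (snd (fst (fst p))), (snd (fst p)), (snd p))
  | 1 => ((fst (fst (fst p))), t, (snd (fst p)), (snd p))
  | 2 => ((fst (fst (fst p))), (snd (fst (fst p))), t, (snd p))
  | _ => ((fst (fst (fst p))), (snd (fst (fst p))), (snd (fst p)), t) end.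

Definition CFun := pt -> C.

Definition pd (k : nat) (f : CFun) (p : pt) : C :=
  (Derive (fun t => Re (f (upd p k t))) (coord p k),
   Derive (fun t => Im (f (upd p k t))) (coord p k)).

Definition C1 (f : CFun) : Prop :=
  forall (k : nat) (p : pt), (k < 4)%nat ->
    ex_derive (fun t => Re (f (upd p k t))) (coord p k) /\
    ex_derive (fun t => Im (f (upd p k t))) (coord p k) /\
    continuous (pd k f) p.

Definition dz1  (f : CFun) (p : pt) : C := / 2 * (pd 0 f p - Ci * pd 1 f p).
Definition dzb1 (f : CFun) (p : pt) : C := / 2 * (pd 0 f p + Ci * pd 1 f p).
Definition dz2  (f : CFun) (p : pt) : C := / 2 * (pd 2 f p - Ci * pd 3 f p).
Definition dzb2 (f : CFun) (p : pt) : C := / 2 * (pd 2 f p + Ci * pd 3 f p).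

(** complex vector fields  a1 d/dz1 + a2 d/dz2 + b1 d/dzbar1 + b2 d/dzbar2 *)
Record VF := mkVF { vz1 : CFun; vz2 : CFun; vzb1 : CFun; vzb2 : CFun }.

Definition VF_C1 (X : VF) : Prop :=
  C1 (vz1 X) /\ C1 (vz2 X) /\ C1 (vzb1 X) /\ C1 (vzb2 X).

Definition app (X : VF) (f : CFun) : CFun := fun p =>
  vz1 X p * dz1 f p + vz2 X p * dz2 f p + vzb1 X p * dzb1 f p + vzb2 X p * dzb2 f p.

Definition vconj (X : VF) : VF :=
  mkVF (fun p => Cconj (vzb1 X p)) (fun p => Cconj (vzb2 X p))
       (fun p => Cconj (vz1 X p)) (fun p => Cconj (vz2 X p)).

(** Lie bracket (the coordinate fields d/dz_j, d/dzbar_j commute) *)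
Definition bracket (X Y : VF) : VF :=
  mkVF (fun p => app X (vz1 Y) p - app Y (vz1 X) p)
       (fun p => app X (vz2 Y) p - app Y (vz2 X) p)
       (fun p => app X (vzb1 Y) p - app Y (vzb1 X) p)
       (fun p => app X (vzb2 Y) p - app Y (vzb2 X) p).

(** complex 1-forms  c1 dz1 + c2 dz2 + e1 dzbar1 + e2 dzbar2 *)
Record Form := mkForm { fz1 : CFun; fz2 : CFun; fzb1 : CFun; fzb2 : CFun }.

Definition Form_C1 (a : Form) : Prop :=
  C1 (fz1 a) /\ C1 (fz2 a) /\ C1 (fzb1 a) /\ C1 (fzb2 a).

Definition ev (a : Form) (X : VF) : CFun := fun p =>
  fz1 a p * vz1 X p + fz2 a p * vz2 X p + fzb1 a p * vzb1 X p + fzb2 a p * vzb2 X p.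

(** conjugate form: (conj a)(X) = conj (a (conj X)) *)
Definition fconj (a : Form) : Form :=
  mkForm (fun p => Cconj (fzb1 a p)) (fun p => Cconj (fzb2 a p))
         (fun p => Cconj (fz1 a p)) (fun p => Cconj (fz2 a p)).

(** exterior derivative of a 1-form, evaluated on two vector fields *)
Definition d1 (a : Form) (X Y : VF) : CFun := fun p =>
  app X (ev a Y) p - app Y (ev a X) p - ev a (bracket X Y) p.

Definition wedge (a b : Form) (X Y : VF) : CFun := fun p =>
  ev a X p * ev b Y p - ev a Y p * ev b X p.

Definition fscale (c : CFun) (a : Form) : Form :=
  mkForm (fun p => c p * fz1 a p) (fun p => c p * fz2 a p)
         (fun p => c p * fzb1 a p) (fun p => c p * fzb2 a p).

Section Ellipsoid.
Variables A1 B1 A2 B2 : R.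

Definition uE : CFun := fun p =>
  RtoC (A1 * (coord p 0)^2 + B1 * (coord p 1)^2 + A2 * (coord p 2)^2
        + B2 * (coord p 3)^2 - 1)%R.

Definition onM (p : pt) : Prop := uE p = RtoC 0.

Definition thetaE : Form :=
  mkForm (fun p => - (Ci / 2) * dz1 uE p) (fun p => - (Ci / 2) * dz2 uE p)
         (fun p => (Ci / 2) * dzb1 uE p) (fun p => (Ci / 2) * dzb2 uE p).

(** the frame Z_1 = u_{z2} d/dz1 - u_{z1} d/dz2 of T_{1,0}M, and Z_{bar 1} *)
Definition Z1 : VF :=
  mkVF (fun p => dz2 uE p) (fun p => - dz1 uE p) (fun _ => RtoC 0) (fun _ => RtoC 0).
Definition Z1b : VF := vconj Z1.

(** h_{1 bar1}, from d theta = i h theta^1 /\ theta^{bar1} evaluated on (Z_1, Z_{bar1}) *)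
Definition hE : CFun := fun p => - Ci * d1 thetaE Z1 Z1b p.

(** T is (a C^1 ambient extension of) the Reeb field of theta on M *)
Definition IsReeb (T : VF) : Prop :=
  VF_C1 T /\
  (forall p, vzb1 T p = Cconj (vz1 T p) /\ vzb2 T p = Cconj (vz2 T p)) /\
  (forall p, onM p ->
     app T uE p = RtoC 0 /\ ev thetaE T p = RtoC 1 /\
     d1 thetaE T Z1 p = RtoC 0 /\ d1 thetaE T Z1b p = RtoC 0).

(** th1 is (a C^1 ambient extension of) theta^1 in the coframe
    {theta, theta^1, theta^{bar1}} dual to {T, Z_1, Z_{bar1}} on M *)
Definition IsCoframe (T : VF) (th1 : Form) : Prop :=
  Form_C1 th1 /\
  (forall p, onM p ->
     ev th1 T p = RtoC 0 /\ ev th1 Z1 p = RtoC 1 /\ ev th1 Z1b p = RtoC 0).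

(** om is (a C^1 ambient extension of) the Tanaka-Webster connection form
    theta_1^1 : d theta^1 = theta^1 /\ om + theta /\ tau^1 with
    tau^1 = Atau theta^{bar1}, and om + conj om = h^{-1} dh  (on TM) *)
Definition IsTWconn (T : VF) (th1 om : Form) : Prop :=
  Form_C1 om /\
  exists Atau : CFun,
  forall p, onM p ->
    (forall X Y, (X, Y) = (Z1, Z1b) \/ (X, Y) = (Z1, T) \/ (X, Y) = (Z1b, T) ->
       d1 th1 X Y p =
         wedge th1 om X Y p + wedge thetaE (fscale Atau (fconj th1)) X Y p) /\
    (forall X, X = Z1 \/ X = Z1b \/ X = T ->
       ev om X p + ev (fconj om) X p = app X hE p / hE p).

(** Rc is the Webster curvature: d om = Rc h theta^1 /\ theta^{bar1} mod theta on TM,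
    i.e. d om - Rc h theta^1 /\ theta^{bar1} = theta /\ beta for some 1-form beta *)
Definition IsWebsterCurv (T : VF) (th1 om : Form) (Rc : pt -> R) : Prop :=
  forall p, onM p -> exists beta : Form,
    forall X Y, (X, Y) = (Z1, Z1b) \/ (X, Y) = (Z1, T) \/ (X, Y) = (Z1b, T) ->
      d1 om X Y p - RtoC (Rc p) * hE p * wedge th1 (fconj th1) X Y p
        = wedge thetaE beta X Y p.
End Ellipsoid.

(* On M the structure equations determine every quantity pointwise from the defining function u.
   With alpha_j = (A_j + B_j)/2, beta_j = (A_j - B_j)/2 one has u_{z_j} = beta_j z_j + alpha_j zbar_j,
   and the Levi function is D = h_{1 bar1} = alpha2 |u_{z1}|^2 + alpha1 |u_{z2}|^2 > 0. The equations
   d theta(T, Z_1) = 0, theta(T) = 1, T u = 0 give D T = i (alpha2 u_{zbar1}, alpha1 u_{zbar2}) on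
   the holomorphic side, hence [Z_1, Z_{bar1}] = -i D T. The structure equations of theta^1 then give
   theta_1^1(Z_{bar1}) = 0, D theta_1^1(Z_1) = Z_1 D and an explicit D^2 theta_1^1(T), and finally
     R D^4 = 2 alpha1 alpha2 D^3 - D^2 (alpha2 beta1^2 |u_{z2}|^2 + alpha1 beta2^2 |u_{z1}|^2)
             + D |Z_1 D|^2.
   As beta_j^2 <= alpha_j^2, the middle term is at most alpha1 alpha2 D^3, so R >= alpha1 alpha2 / D.
   Derivatives of the ambient extensions along fields tangent to M are computed from their values on
   M alone: a function constant on the ellipsoid has zero derivative along a curve in it, namely the
   radial projection of a chord, and the C^1 hypotheses give the chain rule along that curve. *)

From Pilot Require Import Defs.
From Stdlib Require Import Reals Lra Psatz FunctionalExtensionality.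
From Coquelicot Require Import Coquelicot.
Open Scope R_scope.

Definition partial (k : nat) (F : pt -> R) (q : pt) : R :=
  Derive (fun t => F (upd q k t)) (coord q k).

Definition has_partials (F : pt -> R) : Prop :=
  forall k q, (k < 4)%nat -> ex_derive (fun t => F (upd q k t)) (coord q k).

Definition dir_deriv (F : pt -> R) (p v : pt) : R :=
  coord v 0 * partial 0 F p + coord v 1 * partial 1 F p
  + coord v 2 * partial 2 F p + coord v 3 * partial 3 F p.

Definition grad (F : pt -> R) (p : pt) : pt :=
  (partial 0 F p, partial 1 F p, partial 2 F p, partial 3 F p).

Definition psub (q p : pt) : pt :=
  (coord q 0 - coord p 0, coord q 1 - coord p 1, coord q 2 - coord p 2, coord q 3 - coord p 3).

Definition norm1 (v : pt) : R :=
  Rabs (coord v 0) + Rabs (coord v 1) + Rabs (coord v 2) + Rabs (coord v 3).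

Definition differentiable_at (F : pt -> R) (p : pt) : Prop :=
  forall eps, 0 < eps -> exists d, 0 < d /\ forall q : pt, ball p d q ->
    Rabs (F q - F p - dir_deriv F p (psub q p)) <= eps * norm1 (psub q p).

Lemma ball_pt (p q : pt) (d : R) :
  ball p d q <->
  Rabs (coord q 0 - coord p 0) < d /\ Rabs (coord q 1 - coord p 1) < d /\
  Rabs (coord q 2 - coord p 2) < d /\ Rabs (coord q 3 - coord p 3) < d.
Proof.
  destruct p as [[[p0 p1] p2] p3], q as [[[q0 q1] q2] q3].
  simpl; split.
  - intros [[[H0 H1] H2] H3]; repeat split; assumption.
  - intros [H0 [H1 [H2 H3]]]; repeat split; assumption.
Qed.

Lemma norm1_ge0 (v : pt) : 0 <= norm1 v.
Proof.
  unfold norm1.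
  pose proof (Rabs_pos (coord v 0)); pose proof (Rabs_pos (coord v 1)).
  pose proof (Rabs_pos (coord v 2)); pose proof (Rabs_pos (coord v 3)); lra.
Qed.

Lemma norm1_psub (q p : pt) :
  norm1 (psub q p) = Rabs (coord q 0 - coord p 0) + Rabs (coord q 1 - coord p 1)
                     + Rabs (coord q 2 - coord p 2) + Rabs (coord q 3 - coord p 3).
Proof. reflexivity. Qed.

Lemma Rabs_dot4 (a0 a1 a2 a3 b0 b1 b2 b3 : R) :
  Rabs (a0 * b0 + a1 * b1 + a2 * b2 + a3 * b3) <=
  Rabs a0 * Rabs b0 + Rabs a1 * Rabs b1 + Rabs a2 * Rabs b2 + Rabs a3 * Rabs b3.
Proof.
  rewrite <- !Rabs_mult.
  eapply Rle_trans; [apply Rabs_triang|].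
  apply Rplus_le_compat_r; eapply Rle_trans; [apply Rabs_triang|].
  apply Rplus_le_compat_r; apply Rabs_triang.
Qed.

Lemma mvt_ball (f : R -> R) (a b d : R) :
  (forall c, ex_derive f c) -> Rabs (b - a) < d ->
  exists c, Rabs (c - a) < d /\ f b - f a = Derive f c * (b - a).
Proof.
  intros Hd Hb.
  destruct (MVT_cor4 f (Derive f) a (Rabs (b - a))) with (b := b) as [c [Hc1 Hc2]].
  - intros c _. apply Derive_correct, Hd.
  - lra.
  - exists c. split; [lra | exact Hc1].
Qed.

Lemma continuous_pt_ball (F : pt -> R) (p : pt) : continuous F p ->
  forall eps, 0 < eps -> exists d, 0 < d /\ forall q : pt, ball p d q -> Rabs (F q - F p) < eps.
Proof.
  intros Hc eps He.
  destruct (proj1 (filterlim_locally F (F p)) Hc (mkposreal eps He)) as [d Hd].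
  exists d; split; [apply cond_pos | exact Hd].
Qed.

Lemma mvt_coordinate_path (F : pt -> R) (p q : pt) (d : R) :
  has_partials F -> ball p d q ->
  exists c0 c1 c2 c3 : pt,
    ball p d c0 /\ ball p d c1 /\ ball p d c2 /\ ball p d c3 /\
    F q - F p = partial 0 F c0 * (coord q 0 - coord p 0) + partial 1 F c1 * (coord q 1 - coord p 1)
              + partial 2 F c2 * (coord q 2 - coord p 2) + partial 3 F c3 * (coord q 3 - coord p 3).
Proof.
  intros HD Hq. apply ball_pt in Hq.
  destruct p as [[[p0 p1] p2] p3], q as [[[q0 q1] q2] q3].
  simpl in Hq; destruct Hq as [Q0 [Q1 [Q2 Q3]]]. pose proof (Rabs_pos (q0 - p0)).
  destruct (mvt_ball (fun t => F (t, p1, p2, p3)) p0 q0 d) as [c0 [E0 M0]];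
    [intros c; exact (HD 0%nat (c, p1, p2, p3) ltac:(lia)) | exact Q0 |].
  destruct (mvt_ball (fun t => F (q0, t, p2, p3)) p1 q1 d) as [c1 [E1 M1]];
    [intros c; exact (HD 1%nat (q0, c, p2, p3) ltac:(lia)) | exact Q1 |].
  destruct (mvt_ball (fun t => F (q0, q1, t, p3)) p2 q2 d) as [c2 [E2 M2]];
    [intros c; exact (HD 2%nat (q0, q1, c, p3) ltac:(lia)) | exact Q2 |].
  destruct (mvt_ball (fun t => F (q0, q1, q2, t)) p3 q3 d) as [c3 [E3 M3]];
    [intros c; exact (HD 3%nat (q0, q1, q2, c) ltac:(lia)) | exact Q3 |].
  exists (c0, p1, p2, p3), (q0, c1, p2, p3), (q0, q1, c2, p3), (q0, q1, q2, c3).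
  refine (conj _ (conj _ (conj _ (conj _ _))));
    try (apply ball_pt; simpl; rewrite ?Rminus_diag, ?Rabs_R0; repeat split; lra).
  unfold partial; simpl. cbv beta in M0, M1, M2, M3. lra.
Qed.

Lemma differentiable_at_of_partials (F : pt -> R) (p : pt) :
  has_partials F -> (forall k, (k < 4)%nat -> continuous (partial k F) p) ->
  differentiable_at F p.
Proof.
  intros HD Hc eps He.
  destruct (continuous_pt_ball _ _ (Hc 0%nat ltac:(lia)) eps He) as [d0 [Hd0 C0]].
  destruct (continuous_pt_ball _ _ (Hc 1%nat ltac:(lia)) eps He) as [d1 [Hd1 C1]].
  destruct (continuous_pt_ball _ _ (Hc 2%nat ltac:(lia)) eps He) as [d2 [Hd2 C2]].
  destruct (continuous_pt_ball _ _ (Hc 3%nat ltac:(lia)) eps He) as [d3 [Hd3 C3]].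
  pose proof (Rmin_l (Rmin d0 d1) (Rmin d2 d3)); pose proof (Rmin_r (Rmin d0 d1) (Rmin d2 d3)).
  pose proof (Rmin_l d0 d1); pose proof (Rmin_r d0 d1).
  pose proof (Rmin_l d2 d3); pose proof (Rmin_r d2 d3).
  set (d := Rmin (Rmin d0 d1) (Rmin d2 d3)) in *.
  exists d; split; [apply Rmin_pos; apply Rmin_pos; assumption|].
  intros q Hq.
  destruct (mvt_coordinate_path F p q d HD Hq) as (c0 & c1 & c2 & c3 & B0 & B1 & B2 & B3 & Hinc).
  assert (K0 := C0 c0 (ball_le p d d0 ltac:(lra) c0 B0)).
  assert (K1 := C1 c1 (ball_le p d d1 ltac:(lra) c1 B1)).
  assert (K2 := C2 c2 (ball_le p d d2 ltac:(lra) c2 B2)).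
  assert (K3 := C3 c3 (ball_le p d d3 ltac:(lra) c3 B3)).
  replace (F q - F p - dir_deriv F p (psub q p)) with
    ((partial 0 F c0 - partial 0 F p) * (coord q 0 - coord p 0)
     + (partial 1 F c1 - partial 1 F p) * (coord q 1 - coord p 1)
     + (partial 2 F c2 - partial 2 F p) * (coord q 2 - coord p 2)
     + (partial 3 F c3 - partial 3 F p) * (coord q 3 - coord p 3))
    by (rewrite Hinc; unfold dir_deriv, psub; simpl; ring).
  rewrite norm1_psub. eapply Rle_trans; [apply Rabs_dot4|].
  pose proof (Rabs_pos (coord q 0 - coord p 0)); pose proof (Rabs_pos (coord q 1 - coord p 1)).
  pose proof (Rabs_pos (coord q 2 - coord p 2)); pose proof (Rabs_pos (coord q 3 - coord p 3)).
  nra.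
Qed.

Lemma Rabs_dir_deriv_le (F : pt -> R) (p v : pt) :
  Rabs (dir_deriv F p v) <= norm1 (grad F p) * norm1 v.
Proof.
  unfold dir_deriv, norm1; destruct v as [[[v0 v1] v2] v3]; simpl.
  eapply Rle_trans; [apply Rabs_dot4|].
  pose proof (Rabs_pos v0); pose proof (Rabs_pos v1).
  pose proof (Rabs_pos v2); pose proof (Rabs_pos v3).
  pose proof (Rabs_pos (partial 0 F p)); pose proof (Rabs_pos (partial 1 F p)).
  pose proof (Rabs_pos (partial 2 F p)); pose proof (Rabs_pos (partial 3 F p)).
  nra.
Qed.

Lemma continuous_of_differentiable_at (F : pt -> R) (p : pt) :
  differentiable_at F p -> continuous F p.
Proof.
  intros HF. apply (proj2 (filterlim_locally F (F p))). intros eps.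
  destruct (HF 1 Rlt_0_1) as [d [Hd Hq]].
  set (G := norm1 (grad F p)).
  assert (HG : 0 <= G) by apply norm1_ge0.
  set (r := Rmin d (eps / (4 * (1 + G)))).
  assert (Hr : 0 < r) by (apply Rmin_pos; [lra | apply Rdiv_lt_0_compat; [apply cond_pos | lra]]).
  exists (mkposreal r Hr). intros q Hb; simpl in Hb.
  assert (Hbd : ball p d q).
  { apply ball_pt in Hb; apply ball_pt. pose proof (Rmin_l d (eps / (4 * (1 + G)))).
    fold r in H; repeat split; lra. }
  specialize (Hq q Hbd).
  assert (Hn : norm1 (psub q p) < 4 * r).
  { apply ball_pt in Hb; rewrite norm1_psub; lra. }
  assert (Hr' : 4 * r * (1 + G) <= eps).
  { pose proof (Rmin_r d (eps / (4 * (1 + G)))). fold r in H.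
    apply (Rmult_le_compat_r (4 * (1 + G))) in H; [|lra].
    replace (eps / (4 * (1 + G)) * (4 * (1 + G))) with (pos eps) in H by (field; lra). lra. }
  pose proof (Rabs_dir_deriv_le F p (psub q p)). fold G in H.
  pose proof (norm1_ge0 (psub q p)).
  change (Rabs (F q - F p) < eps).
  replace (F q - F p) with ((F q - F p - dir_deriv F p (psub q p)) + dir_deriv F p (psub q p))
    by ring.
  eapply Rle_lt_trans; [apply Rabs_triang|]. nra.
Qed.

Lemma derivable_pt_lim_increment (f : R -> R) (x l : R) : derivable_pt_lim f x l ->
  forall eps, 0 < eps -> exists delta, 0 < delta /\ forall h, Rabs h < delta ->
    Rabs (f (x + h) - f x - h * l) <= eps * Rabs h.
Proof.
  intros Hf eps He. destruct (Hf eps He) as [del Hd].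
  exists del; split; [apply cond_pos|]. intros h Hh.
  destruct (Req_dec h 0) as [-> | Hh0].
  - rewrite Rplus_0_r, Rabs_R0. replace (f x - f x - 0 * l) with 0 by ring.
    rewrite Rabs_R0; lra.
  - replace (f (x + h) - f x - h * l) with (h * ((f (x + h) - f x) / h - l)) by (field; exact Hh0).
    rewrite Rabs_mult, Rmult_comm. apply Rmult_le_compat_r; [apply Rabs_pos|].
    left; apply Hd; assumption.
Qed.

Lemma derivable_pt_lim_of_increment (f : R -> R) (x l : R) :
  (forall eps, 0 < eps -> exists delta, 0 < delta /\ forall h, h <> 0 -> Rabs h < delta ->
     Rabs (f (x + h) - f x - h * l) <= eps * Rabs h) ->
  derivable_pt_lim f x l.
Proof.
  intros Hf eps He. destruct (Hf (eps / 2) ltac:(lra)) as [d [Hd Hh]].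
  exists (mkposreal d Hd). intros h Hh0 Hhd.
  assert (Hpos : 0 < Rabs h) by (apply Rabs_pos_lt; exact Hh0).
  replace ((f (x + h) - f x) / h - l) with ((f (x + h) - f x - h * l) / h) by (field; exact Hh0).
  rewrite Rabs_div by exact Hh0.
  apply (Rmult_lt_reg_r (Rabs h)); [exact Hpos|].
  unfold Rdiv; rewrite Rmult_assoc, Rinv_l, Rmult_1_r by lra.
  specialize (Hh h Hh0 Hhd). nra.
Qed.

Definition psub_scale (w : pt) (h : R) (v : pt) : pt :=
  (coord w 0 - h * coord v 0, coord w 1 - h * coord v 1,
   coord w 2 - h * coord v 2, coord w 3 - h * coord v 3).

Lemma dir_deriv_psub_scale (F : pt -> R) (p w v : pt) (h : R) :
  dir_deriv F p (psub_scale w h v) = dir_deriv F p w - h * dir_deriv F p v.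
Proof. unfold dir_deriv, psub_scale; simpl; ring. Qed.

Lemma norm1_le_psub_scale (w v : pt) (h : R) :
  norm1 w <= norm1 (psub_scale w h v) + Rabs h * norm1 v.
Proof.
  assert (Htri : forall a b, Rabs a <= Rabs (a - h * b) + Rabs h * Rabs b).
  { intros a b. rewrite <- Rabs_mult.
    replace a with ((a - h * b) + h * b) at 1 by ring. apply Rabs_triang. }
  destruct w as [[[w0 w1] w2] w3], v as [[[v0 v1] v2] v3]. unfold norm1, psub_scale; simpl.
  pose proof (Htri w0 v0); pose proof (Htri w1 v1).
  pose proof (Htri w2 v2); pose proof (Htri w3 v3).
  lra.
Qed.

Lemma ball_of_norm1 (p q : pt) (d : R) : norm1 (psub q p) < d -> ball p d q.
Proof.
  rewrite norm1_psub. intros H. apply ball_pt.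
  pose proof (Rabs_pos (coord q 0 - coord p 0)); pose proof (Rabs_pos (coord q 1 - coord p 1)).
  pose proof (Rabs_pos (coord q 2 - coord p 2)); pose proof (Rabs_pos (coord q 3 - coord p 3)).
  repeat split; lra.
Qed.

Lemma curve_first_order (g : R -> pt) (p v : pt) : g 0 = p ->
  (forall k, (k < 4)%nat -> derivable_pt_lim (fun t => coord (g t) k) 0 (coord v k)) ->
  forall e, 0 < e -> exists delta, 0 < delta /\ forall h, Rabs h < delta ->
    norm1 (psub_scale (psub (g h) p) h v) <= e * Rabs h.
Proof.
  intros Hg0 Hg e He.
  destruct (derivable_pt_lim_increment _ _ _ (Hg 0%nat ltac:(lia)) (e / 4) ltac:(lra))
    as [d0 [Hd0 I0]].
  destruct (derivable_pt_lim_increment _ _ _ (Hg 1%nat ltac:(lia)) (e / 4) ltac:(lra))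
    as [d1 [Hd1 I1]].
  destruct (derivable_pt_lim_increment _ _ _ (Hg 2%nat ltac:(lia)) (e / 4) ltac:(lra))
    as [d2 [Hd2 I2]].
  destruct (derivable_pt_lim_increment _ _ _ (Hg 3%nat ltac:(lia)) (e / 4) ltac:(lra))
    as [d3 [Hd3 I3]].
  pose proof (Rmin_l (Rmin d0 d1) (Rmin d2 d3)); pose proof (Rmin_r (Rmin d0 d1) (Rmin d2 d3)).
  pose proof (Rmin_l d0 d1); pose proof (Rmin_r d0 d1).
  pose proof (Rmin_l d2 d3); pose proof (Rmin_r d2 d3).
  exists (Rmin (Rmin d0 d1) (Rmin d2 d3)); split; [repeat apply Rmin_pos; assumption|].
  intros h Hh.
  specialize (I0 h ltac:(lra)); specialize (I1 h ltac:(lra));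
  specialize (I2 h ltac:(lra)); specialize (I3 h ltac:(lra)).
  rewrite Rplus_0_l, Hg0 in I0, I1, I2, I3.
  change (Rabs (coord (g h) 0 - coord p 0 - h * coord v 0)
          + Rabs (coord (g h) 1 - coord p 1 - h * coord v 1)
          + Rabs (coord (g h) 2 - coord p 2 - h * coord v 2)
          + Rabs (coord (g h) 3 - coord p 3 - h * coord v 3) <= e * Rabs h).
  lra.
Qed.

Lemma derivable_pt_lim_along_curve (F : pt -> R) (p v : pt) (g : R -> pt) :
  differentiable_at F p -> g 0 = p ->
  (forall k, (k < 4)%nat -> derivable_pt_lim (fun t => coord (g t) k) 0 (coord v k)) ->
  derivable_pt_lim (fun t => F (g t)) 0 (dir_deriv F p v).
Proof.
  intros HF Hg0 Hg. apply derivable_pt_lim_of_increment. intros eps He.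
  set (P := norm1 (grad F p)).
  set (V := norm1 v + 1).
  assert (HP : 0 <= P) by apply norm1_ge0.
  assert (HV : 1 <= V) by (pose proof (norm1_ge0 v); unfold V; lra).
  set (e1 := Rmin 1 (eps / (2 * (P + 1)))).
  assert (He1 : 0 < e1) by (apply Rmin_pos; [lra | apply Rdiv_lt_0_compat; lra]).
  assert (He1' : e1 <= 1) by apply Rmin_l.
  assert (He1P : e1 * P <= eps / 2).
  { pose proof (Rmin_r 1 (eps / (2 * (P + 1)))) as H. fold e1 in H.
    apply (Rmult_le_compat_r (2 * (P + 1))) in H; [|lra].
    replace (eps / (2 * (P + 1)) * (2 * (P + 1))) with eps in H by (field; lra). nra. }
  destruct (HF (eps / (2 * V)) ltac:(apply Rdiv_lt_0_compat; lra)) as [d [Hd HFd]].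
  destruct (curve_first_order g p v Hg0 Hg e1 He1) as [d1 [Hd1 Hcurve]].
  pose proof (Rmin_l d1 (d / V)); pose proof (Rmin_r d1 (d / V)).
  exists (Rmin d1 (d / V)); split; [apply Rmin_pos; [lra | apply Rdiv_lt_0_compat; lra]|].
  intros h _ Hh. rewrite Rplus_0_l, Hg0.
  specialize (Hcurve h ltac:(lra)). set (q := g h) in *.
  pose proof (Rabs_pos h). pose proof (norm1_ge0 v).
  assert (Hs : norm1 (psub q p) <= V * Rabs h).
  { pose proof (norm1_le_psub_scale (psub q p) v h). unfold V. nra. }
  assert (Hball : ball p d q).
  { apply ball_of_norm1. assert (d / V * V = d) by (field; lra).
    apply (Rmult_lt_compat_r V) in Hh; [nra | lra]. }
  specialize (HFd q Hball).
  pose proof (Rabs_dir_deriv_le F p (psub_scale (psub q p) h v)) as Hdr. fold P in Hdr.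
  rewrite dir_deriv_psub_scale in Hdr.
  replace (F q - F p - h * dir_deriv F p v) with
    ((F q - F p - dir_deriv F p (psub q p)) + (dir_deriv F p (psub q p) - h * dir_deriv F p v))
    by ring.
  eapply Rle_trans; [apply Rabs_triang|].
  assert (eps / (2 * V) * norm1 (psub q p) <= eps / 2 * Rabs h).
  { apply Rle_trans with (eps / (2 * V) * (V * Rabs h)).
    - apply Rmult_le_compat_l; [left; apply Rdiv_lt_0_compat; lra | exact Hs].
    - right; field; lra. }
  nra.
Qed.

Section EllipsoidCurve.
Variables A1 B1 A2 B2 : R.

Definition ellipsoid_bilin (q v : pt) : R :=
  A1 * coord q 0 * coord v 0 + B1 * coord q 1 * coord v 1
  + A2 * coord q 2 * coord v 2 + B2 * coord q 3 * coord v 3.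

Definition ellipsoid_form (q : pt) : R := ellipsoid_bilin q q.

(* The chord through [p] in direction [v], radially projected back onto the ellipsoid. *)
Definition ellipsoid_curve (p v : pt) (t : R) : pt :=
  let s := / sqrt (1 + t ^ 2 * ellipsoid_form v) in
  (s * (coord p 0 + t * coord v 0), s * (coord p 1 + t * coord v 1),
   s * (coord p 2 + t * coord v 2), s * (coord p 3 + t * coord v 3)).

Lemma derivable_pt_lim_normalized_line (a b c : R) :
  derivable_pt_lim (fun t => / sqrt (1 + t ^ 2 * c) * (a + t * b)) 0 b.
Proof.
  apply is_derive_Reals. auto_derive; rewrite !Rmult_0_l, Rplus_0_r, sqrt_1.
  - split; [lra | split; [lra | exact I]].
  - field.
Qed.

Lemma ellipsoid_curve_0 (p v : pt) : ellipsoid_curve p v 0 = p.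
Proof.
  unfold ellipsoid_curve. rewrite pow_i, Rmult_0_l, Rplus_0_r, sqrt_1, Rinv_1 by lia.
  destruct p as [[[p0 p1] p2] p3]; simpl; repeat f_equal; ring.
Qed.

Lemma derivable_pt_lim_ellipsoid_curve (p v : pt) (k : nat) : (k < 4)%nat ->
  derivable_pt_lim (fun t => coord (ellipsoid_curve p v t) k) 0 (coord v k).
Proof.
  intros Hk. destruct k as [|[|[|[|k]]]]; try lia; apply derivable_pt_lim_normalized_line.
Qed.

Hypotheses (HA1 : 0 <= A1) (HB1 : 0 <= B1) (HA2 : 0 <= A2) (HB2 : 0 <= B2).

Lemma ellipsoid_form_ge0 (v : pt) : 0 <= ellipsoid_form v.
Proof.
  unfold ellipsoid_form, ellipsoid_bilin.
  pose proof (Rle_0_sqr (coord v 0)); pose proof (Rle_0_sqr (coord v 1)).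
  pose proof (Rle_0_sqr (coord v 2)); pose proof (Rle_0_sqr (coord v 3)).
  unfold Rsqr in *. nra.
Qed.

Lemma ellipsoid_curve_on_ellipsoid (p v : pt) (t : R) :
  ellipsoid_form p = 1 -> ellipsoid_bilin p v = 0 ->
  ellipsoid_form (ellipsoid_curve p v t) = 1.
Proof.
  intros Hp Hv. pose proof (ellipsoid_form_ge0 v) as Hq.
  assert (Hw : 0 < 1 + t ^ 2 * ellipsoid_form v) by (pose proof (pow2_ge_0 t); nra).
  assert (Hs : (/ sqrt (1 + t ^ 2 * ellipsoid_form v)) ^ 2 = / (1 + t ^ 2 * ellipsoid_form v)).
  { rewrite pow_inv, <- Rsqr_pow2, Rsqr_sqrt; lra. }
  unfold ellipsoid_curve; cbv zeta.
  set (w := 1 + t ^ 2 * ellipsoid_form v) in *.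
  transitivity ((/ sqrt w) ^ 2 *
    (ellipsoid_form p + 2 * t * ellipsoid_bilin p v + t ^ 2 * ellipsoid_form v)).
  - unfold ellipsoid_form, ellipsoid_bilin; simpl; ring.
  - rewrite Hp, Hv, Hs; unfold w in *; field; lra.
Qed.

Lemma dir_deriv_tangent_eq_0 (F : pt -> R) (c : R) (p v : pt) :
  differentiable_at F p -> (forall q, ellipsoid_form q = 1 -> F q = c) ->
  ellipsoid_form p = 1 -> ellipsoid_bilin p v = 0 -> dir_deriv F p v = 0.
Proof.
  intros HF HFc Hp Hv.
  apply (uniqueness_limite (fun t => F (ellipsoid_curve p v t)) 0).
  - apply derivable_pt_lim_along_curve;
      [exact HF | apply ellipsoid_curve_0 | apply derivable_pt_lim_ellipsoid_curve].
  - replace (fun t => F (ellipsoid_curve p v t)) with (fun _ : R => c).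
    + apply derivable_pt_lim_const.
    + apply functional_extensionality; intros t.
      symmetry; apply HFc, ellipsoid_curve_on_ellipsoid; assumption.
Qed.

End EllipsoidCurve.

Lemma upd_coord (q : pt) (k : nat) : upd q k (coord q k) = q.
Proof. destruct q as [[[q0 q1] q2] q3]; destruct k as [|[|[|k]]]; reflexivity. Qed.

Definition C1_at_R (F : pt -> R) (p : pt) : Prop :=
  has_partials F /\ forall k, (k < 4)%nat -> continuous (partial k F) p.

Lemma C1_at_R_continuous (F : pt -> R) (p : pt) : C1_at_R F p -> continuous F p.
Proof.
  intros [HD Hc]. apply continuous_of_differentiable_at, differentiable_at_of_partials; assumption.
Qed.

Lemma partial_plus (k : nat) (F G : pt -> R) (q : pt) : (k < 4)%nat ->
  has_partials F -> has_partials G ->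
  partial k (fun x => F x + G x) q = partial k F q + partial k G q.
Proof. intros Hk HF HG. apply Derive_plus; [apply HF | apply HG]; exact Hk. Qed.

Lemma partial_opp (k : nat) (F : pt -> R) (q : pt) :
  partial k (fun x => - F x) q = - partial k F q.
Proof. apply Derive_opp. Qed.

Lemma partial_mult (k : nat) (F G : pt -> R) (q : pt) : (k < 4)%nat ->
  has_partials F -> has_partials G ->
  partial k (fun x => F x * G x) q = partial k F q * G q + F q * partial k G q.
Proof.
  intros Hk HF HG. unfold partial.
  rewrite Derive_mult by (first [apply HF | apply HG]; exact Hk).
  rewrite upd_coord. ring.
Qed.

Lemma C1_at_R_plus (F G : pt -> R) (p : pt) :
  C1_at_R F p -> C1_at_R G p -> C1_at_R (fun x => F x + G x) p.
Proof.
  intros [HF CF] [HG CG]. split.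
  - intros k q Hk. exact (ex_derive_plus _ _ _ (HF k q Hk) (HG k q Hk)).
  - intros k Hk. apply (continuous_ext (fun q => partial k F q + partial k G q)).
    + intros q. symmetry. apply partial_plus; assumption.
    + apply (continuous_plus (V := R_NormedModule)); [apply CF | apply CG]; exact Hk.
Qed.

Lemma C1_at_R_opp (F : pt -> R) (p : pt) : C1_at_R F p -> C1_at_R (fun x => - F x) p.
Proof.
  intros [HF CF]. split.
  - intros k q Hk. exact (ex_derive_opp _ _ (HF k q Hk)).
  - intros k Hk. apply (continuous_ext (fun q => - partial k F q)).
    + intros q. symmetry. apply partial_opp.
    + apply (continuous_opp (V := R_NormedModule)), CF, Hk.
Qed.

Lemma C1_at_R_mult (F G : pt -> R) (p : pt) :
  C1_at_R F p -> C1_at_R G p -> C1_at_R (fun x => F x * G x) p.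
Proof.
  intros HF' HG'.
  pose proof (C1_at_R_continuous F p HF') as F0; pose proof (C1_at_R_continuous G p HG') as G0.
  destruct HF' as [HF CF], HG' as [HG CG]. split.
  - intros k q Hk. exact (ex_derive_mult _ _ _ (HF k q Hk) (HG k q Hk)).
  - intros k Hk. apply (continuous_ext (fun q => partial k F q * G q + F q * partial k G q)).
    + intros q. symmetry. apply partial_mult; assumption.
    + apply (continuous_plus (V := R_NormedModule));
        apply (continuous_mult (K := R_AbsRing)); auto.
Qed.

Lemma C1_at_R_const (c : R) (p : pt) : C1_at_R (fun _ => c) p.
Proof.
  split.
  - intros k q Hk. apply ex_derive_const.
  - intros k Hk. apply (continuous_ext (fun _ => 0)).
    + intros q. symmetry. exact (Derive_const c _).
    + apply continuous_const.
Qed.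

Lemma partial_coord (j k : nat) (q : pt) : (j < 4)%nat -> (k < 4)%nat ->
  ex_derive (fun t => coord (upd q k t) j) (coord q k) /\
  partial k (fun x => coord x j) q = if Nat.eqb j k then 1 else 0.
Proof.
  intros Hj Hk. unfold partial. destruct q as [[[q0 q1] q2] q3].
  destruct k as [|[|[|[|k]]]]; try lia; destruct j as [|[|[|[|j]]]]; try lia;
    cbn [upd coord fst snd Nat.eqb];
    lazymatch goal with
    | |- ex_derive (fun t => t) _ /\ _ => split; [apply ex_derive_id | apply Derive_id]
    | _ => split; [apply ex_derive_const | apply Derive_const]
    end.
Qed.

Lemma C1_at_R_coord (j : nat) (p : pt) : (j < 4)%nat -> C1_at_R (fun x => coord x j) p.
Proof.
  intros Hj. split.
  - intros k q Hk. apply (partial_coord j k q Hj Hk).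
  - intros k Hk. apply (continuous_ext (fun _ => if Nat.eqb j k then 1 else 0)).
    + intros q. symmetry. apply (partial_coord j k q Hj Hk).
    + apply continuous_const.
Qed.

Definition fre (f : CFun) : pt -> R := fun q => Re (f q).
Definition fim (f : CFun) : pt -> R := fun q => Im (f q).

Definition C1_at (f : CFun) (p : pt) : Prop := C1_at_R (fre f) p /\ C1_at_R (fim f) p.

Open Scope C_scope.

Lemma Ceq (a b : C) : Re a = Re b -> Im a = Im b -> a = b.
Proof. destruct a, b; simpl; intros; subst; reflexivity. Qed.

Lemma C1_C1_at (f : CFun) (p : pt) : Defs.C1 f -> C1_at f p.
Proof.
  intros H. split; split.
  - intros k q Hk. apply (H k q Hk).
  - intros k Hk. apply (continuous_comp (pd k f) fst p), continuous_fst. apply (H k p Hk).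
  - intros k q Hk. apply (H k q Hk).
  - intros k Hk. apply (continuous_comp (pd k f) snd p), continuous_snd. apply (H k p Hk).
Qed.

Lemma C1_at_plus (f g : CFun) (p : pt) :
  C1_at f p -> C1_at g p -> C1_at (fun q => f q + g q) p.
Proof. intros [Hf1 Hf2] [Hg1 Hg2]. split; apply C1_at_R_plus; assumption. Qed.

Lemma C1_at_opp (f : CFun) (p : pt) : C1_at f p -> C1_at (fun q => - f q) p.
Proof. intros [Hf1 Hf2]. split; apply C1_at_R_opp; assumption. Qed.

Lemma C1_at_mult (f g : CFun) (p : pt) :
  C1_at f p -> C1_at g p -> C1_at (fun q => f q * g q) p.
Proof.
  intros [Hf1 Hf2] [Hg1 Hg2]. split.
  - exact (C1_at_R_plus _ _ p (C1_at_R_mult _ _ p Hf1 Hg1)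
             (C1_at_R_opp _ p (C1_at_R_mult _ _ p Hf2 Hg2))).
  - exact (C1_at_R_plus _ _ p (C1_at_R_mult _ _ p Hf1 Hg2) (C1_at_R_mult _ _ p Hf2 Hg1)).
Qed.

Lemma C1_at_conj (f : CFun) (p : pt) : C1_at f p -> C1_at (fun q => Cconj (f q)) p.
Proof. intros [Hf1 Hf2]. split; [exact Hf1 | exact (C1_at_R_opp _ p Hf2)]. Qed.

Lemma C1_at_const (c : C) (p : pt) : C1_at (fun _ => c) p.
Proof. split; apply C1_at_R_const. Qed.

Definition z1 : CFun := fun q => (coord q 0, coord q 1).
Definition z2 : CFun := fun q => (coord q 2, coord q 3).

Lemma C1_at_z1 (p : pt) : C1_at z1 p.
Proof. split; apply C1_at_R_coord; lia. Qed.

Lemma C1_at_z2 (p : pt) : C1_at z2 p.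
Proof. split; apply C1_at_R_coord; lia. Qed.

Create HintDb C1_at.
#[export] Hint Resolve C1_at_z1 C1_at_z2 : C1_at.

Ltac solve_C1_at :=
  repeat lazymatch goal with
  | |- C1_at (fun _ => _ + _) _ => apply C1_at_plus
  | |- C1_at (fun _ => _ * _) _ => apply C1_at_mult
  | |- C1_at (fun _ => - _) _ => apply C1_at_opp
  | |- C1_at (fun _ => Cconj _) _ => apply C1_at_conj
  | |- C1_at (fun _ => ?c) _ => apply (C1_at_const c)
  | |- C1_at _ _ => solve [eauto with C1_at]
  end.

Lemma C1_at_vz1 (X : VF) (q : pt) : VF_C1 X -> C1_at (vz1 X) q.
Proof. intros H. apply C1_C1_at, H. Qed.
Lemma C1_at_vz2 (X : VF) (q : pt) : VF_C1 X -> C1_at (vz2 X) q.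
Proof. intros H. apply C1_C1_at, H. Qed.
Lemma C1_at_vzb1 (X : VF) (q : pt) : VF_C1 X -> C1_at (vzb1 X) q.
Proof. intros H. apply C1_C1_at, H. Qed.
Lemma C1_at_vzb2 (X : VF) (q : pt) : VF_C1 X -> C1_at (vzb2 X) q.
Proof. intros H. apply C1_C1_at, H. Qed.
Lemma C1_at_fz1 (f : Form) (q : pt) : Form_C1 f -> C1_at (fz1 f) q.
Proof. intros H. apply C1_C1_at, H. Qed.
Lemma C1_at_fz2 (f : Form) (q : pt) : Form_C1 f -> C1_at (fz2 f) q.
Proof. intros H. apply C1_C1_at, H. Qed.
Lemma C1_at_fzb1 (f : Form) (q : pt) : Form_C1 f -> C1_at (fzb1 f) q.
Proof. intros H. apply C1_C1_at, H. Qed.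
Lemma C1_at_fzb2 (f : Form) (q : pt) : Form_C1 f -> C1_at (fzb2 f) q.
Proof. intros H. apply C1_C1_at, H. Qed.
#[export] Hint Resolve C1_at_vz1 C1_at_vz2 C1_at_vzb1 C1_at_vzb2
  C1_at_fz1 C1_at_fz2 C1_at_fzb1 C1_at_fzb2 : C1_at.

Lemma pd_plus (k : nat) (f g : CFun) (p : pt) : (k < 4)%nat ->
  C1_at f p -> C1_at g p -> pd k (fun q => f q + g q) p = pd k f p + pd k g p.
Proof.
  intros Hk [[Hf1 _] [Hf2 _]] [[Hg1 _] [Hg2 _]]. apply Ceq.
  - exact (partial_plus k (fre f) (fre g) p Hk Hf1 Hg1).
  - exact (partial_plus k (fim f) (fim g) p Hk Hf2 Hg2).
Qed.

Lemma pd_opp (k : nat) (f : CFun) (p : pt) : pd k (fun q => - f q) p = - pd k f p.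
Proof. apply Ceq; [exact (partial_opp k (fre f) p) | exact (partial_opp k (fim f) p)]. Qed.

Lemma pd_conj (k : nat) (f : CFun) (p : pt) :
  pd k (fun q => Cconj (f q)) p = Cconj (pd k f p).
Proof. apply Ceq; [reflexivity | exact (partial_opp k (fim f) p)]. Qed.

Lemma pd_const (k : nat) (c : C) (p : pt) : pd k (fun _ => c) p = 0.
Proof. unfold pd. rewrite !Derive_const. reflexivity. Qed.

Lemma pd_mult (k : nat) (f g : CFun) (p : pt) : (k < 4)%nat ->
  C1_at f p -> C1_at g p -> pd k (fun q => f q * g q) p = pd k f p * g p + f p * pd k g p.
Proof.
  intros Hk [Hf1 Hf2] [Hg1 Hg2].
  pose proof (proj1 Hf1); pose proof (proj1 Hf2); pose proof (proj1 Hg1); pose proof (proj1 Hg2).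
  apply Ceq.
  - change (partial k (fun x => fre f x * fre g x + - (fim f x * fim g x))%R p
      = Re (pd k f p * g p + f p * pd k g p)).
    rewrite (partial_plus k _ _ p Hk (proj1 (C1_at_R_mult _ _ p Hf1 Hg1))
               (proj1 (C1_at_R_opp _ p (C1_at_R_mult _ _ p Hf2 Hg2)))),
      partial_opp, !partial_mult by assumption.
    unfold partial, fre, fim, pd, Re, Im; cbn [Cplus Cmult fst snd]; ring.
  - change (partial k (fun x => fre f x * fim g x + fim f x * fre g x)%R p
      = Im (pd k f p * g p + f p * pd k g p)).
    rewrite (partial_plus k _ _ p Hk (proj1 (C1_at_R_mult _ _ p Hf1 Hg2))
               (proj1 (C1_at_R_mult _ _ p Hf2 Hg1))), !partial_mult by assumption.
    unfold partial, fre, fim, pd, Re, Im; cbn [Cplus Cmult fst snd]; ring.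
Qed.

Lemma pd_z1 (k : nat) (q : pt) : (k < 4)%nat ->
  pd k z1 q = ((if Nat.eqb 0 k then 1 else 0), (if Nat.eqb 1 k then 1 else 0))%R.
Proof.
  intros Hk. apply Ceq.
  - exact (proj2 (partial_coord 0 k q ltac:(lia) Hk)).
  - exact (proj2 (partial_coord 1 k q ltac:(lia) Hk)).
Qed.

Lemma pd_z2 (k : nat) (q : pt) : (k < 4)%nat ->
  pd k z2 q = ((if Nat.eqb 2 k then 1 else 0), (if Nat.eqb 3 k then 1 else 0))%R.
Proof.
  intros Hk. apply Ceq.
  - exact (proj2 (partial_coord 2 k q ltac:(lia) Hk)).
  - exact (proj2 (partial_coord 3 k q ltac:(lia) Hk)).
Qed.

Section VectorFieldAction.
Variables (X : VF) (p : pt).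

Lemma app_plus (f g : CFun) : C1_at f p -> C1_at g p ->
  app X (fun q => f q + g q) p = app X f p + app X g p.
Proof.
  intros Hf Hg. unfold app, dz1, dz2, dzb1, dzb2. rewrite !pd_plus by (assumption || lia). ring.
Qed.

Lemma app_opp (f : CFun) : app X (fun q => - f q) p = - app X f p.
Proof. unfold app, dz1, dz2, dzb1, dzb2. rewrite !pd_opp. ring. Qed.

Lemma app_mult (f g : CFun) : C1_at f p -> C1_at g p ->
  app X (fun q => f q * g q) p = app X f p * g p + f p * app X g p.
Proof.
  intros Hf Hg. unfold app, dz1, dz2, dzb1, dzb2. rewrite !pd_mult by (assumption || lia). ring.
Qed.

Lemma app_const (c : C) : app X (fun _ => c) p = 0.
Proof. unfold app, dz1, dz2, dzb1, dzb2. rewrite !pd_const. ring. Qed.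

Lemma app_scal (c : C) (f : CFun) : C1_at f p -> app X (fun q => c * f q) p = c * app X f p.
Proof. intros Hf. rewrite (app_mult (fun _ => c) f (C1_at_const c p) Hf), app_const. ring. Qed.

Lemma app_z1 : app X z1 p = vz1 X p.
Proof.
  unfold app, dz1, dz2, dzb1, dzb2. rewrite !pd_z1 by lia.
  apply Ceq; unfold Re, Im; simpl; field.
Qed.

Lemma app_z2 : app X z2 p = vz2 X p.
Proof.
  unfold app, dz1, dz2, dzb1, dzb2. rewrite !pd_z2 by lia.
  apply Ceq; unfold Re, Im; simpl; field.
Qed.

Lemma app_conj_z1 : app X (fun q => Cconj (z1 q)) p = vzb1 X p.
Proof.
  unfold app, dz1, dz2, dzb1, dzb2. rewrite !pd_conj, !pd_z1 by lia.
  apply Ceq; unfold Re, Im; simpl; field.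
Qed.

Lemma app_conj_z2 : app X (fun q => Cconj (z2 q)) p = vzb2 X p.
Proof.
  unfold app, dz1, dz2, dzb1, dzb2. rewrite !pd_conj, !pd_z2 by lia.
  apply Ceq; unfold Re, Im; simpl; field.
Qed.

End VectorFieldAction.

Definition rlinear (c1 c2 c3 c4 : C) : CFun := fun q =>
  c1 * z1 q + c2 * Cconj (z1 q) + c3 * z2 q + c4 * Cconj (z2 q).

Lemma C1_at_rlinear (c1 c2 c3 c4 : C) (p : pt) : C1_at (rlinear c1 c2 c3 c4) p.
Proof. unfold rlinear. solve_C1_at. Qed.
#[export] Hint Resolve C1_at_rlinear : C1_at.

Lemma app_rlinear (X : VF) (c1 c2 c3 c4 : C) (p : pt) :
  app X (rlinear c1 c2 c3 c4) p = c1 * vz1 X p + c2 * vzb1 X p + c3 * vz2 X p + c4 * vzb2 X p.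
Proof.
  unfold rlinear.
  rewrite !app_plus by solve_C1_at.
  rewrite !app_scal by solve_C1_at.
  rewrite app_z1, app_z2, app_conj_z1, app_conj_z2. reflexivity.
Qed.

(* [X = W_re + i W_im] with real vector fields [W_re], [W_im] in the coordinates x1 y1 x2 y2. *)
Definition vf_re (X : VF) (p : pt) : pt :=
  (Re ((vz1 X p + vzb1 X p) / 2), Re (Ci * (vzb1 X p - vz1 X p) / 2),
   Re ((vz2 X p + vzb2 X p) / 2), Re (Ci * (vzb2 X p - vz2 X p) / 2)).
Definition vf_im (X : VF) (p : pt) : pt :=
  (Im ((vz1 X p + vzb1 X p) / 2), Im (Ci * (vzb1 X p - vz1 X p) / 2),
   Im ((vz2 X p + vzb2 X p) / 2), Im (Ci * (vzb2 X p - vz2 X p) / 2)).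

Lemma app_real_form (X : VF) (g : CFun) (p : pt) :
  app X g p =
  (dir_deriv (fre g) p (vf_re X p) - dir_deriv (fim g) p (vf_im X p),
   dir_deriv (fim g) p (vf_re X p) + dir_deriv (fre g) p (vf_im X p))%R.
Proof.
  unfold app, dz1, dz2, dzb1, dzb2, dir_deriv, vf_re, vf_im.
  change (pd 0 g p) with (partial 0 (fre g) p, partial 0 (fim g) p).
  change (pd 1 g p) with (partial 1 (fre g) p, partial 1 (fim g) p).
  change (pd 2 g p) with (partial 2 (fre g) p, partial 2 (fim g) p).
  change (pd 3 g p) with (partial 3 (fre g) p, partial 3 (fim g) p).
  destruct (vz1 X p), (vz2 X p), (vzb1 X p), (vzb2 X p).
  apply Ceq; unfold Re, Im; simpl; field.
Qed.

Lemma ev_fscale (c : CFun) (f : Form) (X : VF) (q : pt) : ev (fscale c f) X q = c q * ev f X q.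
Proof. unfold ev, fscale; cbn [fz1 fz2 fzb1 fzb2]. ring. Qed.

Open Scope R_scope.

Lemma Rlt_0_of_quartic_identity (a1 a2 b1 b2 n1 n2 e L r : R) :
  0 < a1 -> 0 < a2 -> b1 * b1 <= a1 * a1 -> b2 * b2 <= a2 * a2 ->
  0 <= n1 -> 0 <= n2 -> 0 <= e -> L = a2 * n1 + a1 * n2 -> 0 < L ->
  r * (L * L * L * L) =
    2 * a1 * a2 * L * L * L - L * L * (a2 * b1 * b1 * n2 + a1 * b2 * b2 * n1) + L * e ->
  0 < r.
Proof.
  intros Ha1 Ha2 Hb1 Hb2 Hn1 Hn2 He HL HL0 Hr.
  assert (HS : a2 * b1 * b1 * n2 + a1 * b2 * b2 * n1 <= a1 * a2 * L).
  { rewrite HL. assert (a2 * (b1 * b1) * n2 <= a2 * (a1 * a1) * n2) by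
      (apply Rmult_le_compat_r; [lra | apply Rmult_le_compat_l; lra]).
    assert (a1 * (b2 * b2) * n1 <= a1 * (a2 * a2) * n1) by
      (apply Rmult_le_compat_r; [lra | apply Rmult_le_compat_l; lra]).
    nra. }
  assert (Hlow : a1 * a2 * L * L * L <= r * (L * L * L * L)).
  { rewrite Hr. assert (L * L * (a2 * b1 * b1 * n2 + a1 * b2 * b2 * n1) <= L * L * (a1 * a2 * L))
      by (apply Rmult_le_compat_l; nra).
    assert (0 <= L * e) by nra. nra. }
  assert (0 < a1 * a2 * L * L * L) by (repeat apply Rmult_lt_0_compat; lra).
  apply (Rmult_lt_reg_r (L * L * L * L)); [repeat apply Rmult_lt_0_compat; lra|].
  rewrite Rmult_0_l. lra.
Qed.

Open Scope C_scope.

Section Ellipsoid.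
Variables A1 B1 A2 B2 : R.

Local Notation u := (uE A1 B1 A2 B2).
Local Notation M := (onM A1 B1 A2 B2).
Local Notation Q := (ellipsoid_form A1 B1 A2 B2).

Lemma onM_iff (q : pt) : M q <-> Q q = 1%R.
Proof.
  destruct q as [[[x1 y1] x2] y2].
  unfold onM, uE, ellipsoid_form, ellipsoid_bilin; simpl. split; intros H.
  - apply (f_equal Re) in H. simpl in H. nra.
  - apply Ceq; simpl; nra.
Qed.

Definition ellipsoid_coef (k : nat) : R :=
  match k with 0 => A1 | 1 => B1 | 2 => A2 | _ => B2 end.

Lemma pd_uE (k : nat) (q : pt) : (k < 4)%nat ->
  pd k u q = RtoC (2 * ellipsoid_coef k * coord q k).
Proof.
  intros Hk. destruct q as [[[x1 y1] x2] y2].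
  unfold pd, uE; apply Ceq; simpl Re; simpl Im;
    [| rewrite Derive_const; simpl; ring].
  apply is_derive_unique.
  destruct k as [|[|[|[|k]]]]; try lia; simpl; auto_derive; trivial; ring.
Qed.

Lemma dir_deriv_re_uE (p v : pt) :
  dir_deriv (fre u) p v = (2 * ellipsoid_bilin A1 B1 A2 B2 p v)%R.
Proof.
  unfold dir_deriv, ellipsoid_bilin.
  change (partial ?k (fre u) p) with (Re (pd k u p)).
  rewrite !pd_uE by lia. simpl. ring.
Qed.

Lemma dir_deriv_im_uE (p v : pt) : dir_deriv (fim u) p v = 0%R.
Proof.
  unfold dir_deriv.
  change (partial ?k (fim u) p) with (Im (pd k u p)).
  rewrite !pd_uE by lia. simpl. ring.
Qed.

Definition alpha1 : C := RtoC ((A1 + B1) / 2).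
Definition beta1 : C := RtoC ((A1 - B1) / 2).
Definition alpha2 : C := RtoC ((A2 + B2) / 2).
Definition beta2 : C := RtoC ((A2 - B2) / 2).

Definition uz1 : CFun := rlinear beta1 alpha1 0 0.
Definition uzb1 : CFun := rlinear alpha1 beta1 0 0.
Definition uz2 : CFun := rlinear 0 0 beta2 alpha2.
Definition uzb2 : CFun := rlinear 0 0 alpha2 beta2.

Lemma dz1_uE (q : pt) : dz1 u q = uz1 q.
Proof.
  unfold dz1, uz1, rlinear, z1, z2, alpha1, beta1. rewrite !pd_uE by lia.
  apply Ceq; unfold Re, Im; simpl; field.
Qed.

Lemma dzb1_uE (q : pt) : dzb1 u q = uzb1 q.
Proof.
  unfold dzb1, uzb1, rlinear, z1, z2, alpha1, beta1. rewrite !pd_uE by lia.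
  apply Ceq; unfold Re, Im; simpl; field.
Qed.

Lemma dz2_uE (q : pt) : dz2 u q = uz2 q.
Proof.
  unfold dz2, uz2, rlinear, z1, z2, alpha2, beta2. rewrite !pd_uE by lia.
  apply Ceq; unfold Re, Im; simpl; field.
Qed.

Lemma dzb2_uE (q : pt) : dzb2 u q = uzb2 q.
Proof.
  unfold dzb2, uzb2, rlinear, z1, z2, alpha2, beta2. rewrite !pd_uE by lia.
  apply Ceq; unfold Re, Im; simpl; field.
Qed.

Lemma Cconj_RtoC (r : R) : Cconj (RtoC r) = RtoC r.
Proof. apply Ceq; simpl; ring. Qed.

Lemma Cconj_uz1 (q : pt) : Cconj (uz1 q) = uzb1 q.
Proof. unfold uz1, uzb1, rlinear, alpha1, beta1, z1, z2. apply Ceq; simpl; ring. Qed.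
Lemma Cconj_uzb1 (q : pt) : Cconj (uzb1 q) = uz1 q.
Proof. unfold uz1, uzb1, rlinear, alpha1, beta1, z1, z2. apply Ceq; simpl; ring. Qed.
Lemma Cconj_uz2 (q : pt) : Cconj (uz2 q) = uzb2 q.
Proof. unfold uz2, uzb2, rlinear, alpha2, beta2, z1, z2. apply Ceq; simpl; ring. Qed.
Lemma Cconj_uzb2 (q : pt) : Cconj (uzb2 q) = uz2 q.
Proof. unfold uz2, uzb2, rlinear, alpha2, beta2, z1, z2. apply Ceq; simpl; ring. Qed.

Hypotheses (HA1 : (0 < A1)%R) (HB1 : (0 < B1)%R) (HA2 : (0 < A2)%R) (HB2 : (0 < B2)%R).

Lemma app_eq_0_of_const_on_M (X : VF) (g : CFun) (c : C) (p : pt) :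
  C1_at g p -> (forall q, M q -> g q = c) -> M p -> app X u p = 0 -> app X g p = 0.
Proof.
  intros [[Dre Cre] [Dim Cim]] Hc Hp Hu.
  rewrite app_real_form, !dir_deriv_re_uE, !dir_deriv_im_uE in Hu.
  assert (Hre : ellipsoid_bilin A1 B1 A2 B2 p (vf_re X p) = 0%R).
  { apply (f_equal Re) in Hu. simpl in Hu. lra. }
  assert (Him : ellipsoid_bilin A1 B1 A2 B2 p (vf_im X p) = 0%R).
  { apply (f_equal Im) in Hu. simpl in Hu. lra. }
  apply onM_iff in Hp.
  assert (Hgre : forall q, Q q = 1%R -> fre g q = Re c).
  { intros q Hq. unfold fre. rewrite Hc by (apply onM_iff; exact Hq). reflexivity. }
  assert (Hgim : forall q, Q q = 1%R -> fim g q = Im c).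
  { intros q Hq. unfold fim. rewrite Hc by (apply onM_iff; exact Hq). reflexivity. }
  pose proof (differentiable_at_of_partials _ _ Dre Cre) as Fre.
  pose proof (differentiable_at_of_partials _ _ Dim Cim) as Fim.
  pose proof (dir_deriv_tangent_eq_0 A1 B1 A2 B2 (Rlt_le _ _ HA1) (Rlt_le _ _ HB1)
                (Rlt_le _ _ HA2) (Rlt_le _ _ HB2)) as Htan.
  rewrite app_real_form, (Htan _ _ p _ Fre Hgre Hp Hre), (Htan _ _ p _ Fre Hgre Hp Him),
    (Htan _ _ p _ Fim Hgim Hp Hre), (Htan _ _ p _ Fim Hgim Hp Him).
  apply Ceq; simpl; ring.
Qed.

Lemma app_uz1 (X : VF) (q : pt) : app X uz1 q = beta1 * vz1 X q + alpha1 * vzb1 X q.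
Proof. unfold uz1. rewrite app_rlinear. ring. Qed.
Lemma app_uzb1 (X : VF) (q : pt) : app X uzb1 q = alpha1 * vz1 X q + beta1 * vzb1 X q.
Proof. unfold uzb1. rewrite app_rlinear. ring. Qed.
Lemma app_uz2 (X : VF) (q : pt) : app X uz2 q = beta2 * vz2 X q + alpha2 * vzb2 X q.
Proof. unfold uz2. rewrite app_rlinear. ring. Qed.
Lemma app_uzb2 (X : VF) (q : pt) : app X uzb2 q = alpha2 * vz2 X q + beta2 * vzb2 X q.
Proof. unfold uzb2. rewrite app_rlinear. ring. Qed.

Local Notation Z := (Z1 A1 B1 A2 B2).
Local Notation Zb := (Z1b A1 B1 A2 B2).
Local Notation th := (thetaE A1 B1 A2 B2).

Lemma vz1_Z : vz1 Z = uz2.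
Proof. apply functional_extensionality; intros q. apply dz2_uE. Qed.
Lemma vz2_Z : vz2 Z = fun q => - uz1 q.
Proof. apply functional_extensionality; intros q. simpl. rewrite dz1_uE. reflexivity. Qed.
Lemma vzb1_Z : vzb1 Z = fun _ => 0.
Proof. reflexivity. Qed.
Lemma vzb2_Z : vzb2 Z = fun _ => 0.
Proof. reflexivity. Qed.
Lemma vz1_Zb : vz1 Zb = fun _ => 0.
Proof. apply functional_extensionality; intros q. apply Cconj_RtoC. Qed.
Lemma vz2_Zb : vz2 Zb = fun _ => 0.
Proof. apply functional_extensionality; intros q. apply Cconj_RtoC. Qed.
Lemma vzb1_Zb : vzb1 Zb = uzb2.
Proof. apply functional_extensionality; intros q. simpl. rewrite dz2_uE. apply Cconj_uz2. Qed.
Lemma vzb2_Zb : vzb2 Zb = fun q => - uzb1 q.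
Proof.
  apply functional_extensionality; intros q. simpl. rewrite dz1_uE, Copp_conj, Cconj_uz1.
  reflexivity.
Qed.

Lemma fz1_th : fz1 th = fun q => - (Ci / 2) * uz1 q.
Proof. apply functional_extensionality; intros q. simpl. rewrite dz1_uE. reflexivity. Qed.
Lemma fz2_th : fz2 th = fun q => - (Ci / 2) * uz2 q.
Proof. apply functional_extensionality; intros q. simpl. rewrite dz2_uE. reflexivity. Qed.
Lemma fzb1_th : fzb1 th = fun q => Ci / 2 * uzb1 q.
Proof. apply functional_extensionality; intros q. simpl. rewrite dzb1_uE. reflexivity. Qed.
Lemma fzb2_th : fzb2 th = fun q => Ci / 2 * uzb2 q.
Proof. apply functional_extensionality; intros q. simpl. rewrite dzb2_uE. reflexivity. Qed.

Ltac frame_rw := rewrite ?vz1_Z, ?vz2_Z, ?vzb1_Z, ?vzb2_Z, ?vz1_Zb, ?vz2_Zb, ?vzb1_Zb, ?vzb2_Zb,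
  ?fz1_th, ?fz2_th, ?fzb1_th, ?fzb2_th; cbv beta.

Lemma theta_Z : ev th Z = fun _ => 0.
Proof. apply functional_extensionality; intros q. unfold ev. frame_rw. ring. Qed.
Lemma theta_Zb : ev th Zb = fun _ => 0.
Proof. apply functional_extensionality; intros q. unfold ev. frame_rw. ring. Qed.

Lemma app_uE (X : VF) (q : pt) :
  app X u q = vz1 X q * uz1 q + vz2 X q * uz2 q + vzb1 X q * uzb1 q + vzb2 X q * uzb2 q.
Proof. unfold app. rewrite dz1_uE, dz2_uE, dzb1_uE, dzb2_uE. reflexivity. Qed.

Lemma app_Z_uE (q : pt) : app Z u q = 0.
Proof. rewrite app_uE. frame_rw. ring. Qed.
Lemma app_Zb_uE (q : pt) : app Zb u q = 0.
Proof. rewrite app_uE. frame_rw. ring. Qed.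

Lemma C1_at_uz1 (q : pt) : C1_at uz1 q. Proof. apply C1_at_rlinear. Qed.
Lemma C1_at_uzb1 (q : pt) : C1_at uzb1 q. Proof. apply C1_at_rlinear. Qed.
Lemma C1_at_uz2 (q : pt) : C1_at uz2 q. Proof. apply C1_at_rlinear. Qed.
Lemma C1_at_uzb2 (q : pt) : C1_at uzb2 q. Proof. apply C1_at_rlinear. Qed.
#[local] Hint Resolve C1_at_uz1 C1_at_uzb1 C1_at_uz2 C1_at_uzb2 : C1_at.

(* [levi] is [h_{1 bar1}] (lemma [hE_levi]); [levi_Z], [levi_Zb] are its derivatives along
   [Z_1], [Z_{bar1}]. *)
Definition levi : CFun := fun q => alpha2 * (uz1 q * uzb1 q) + alpha1 * (uz2 q * uzb2 q).
Definition levi_Z : CFun := fun q =>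
  alpha2 * beta1 * (uzb1 q * uz2 q) - alpha1 * beta2 * (uz1 q * uzb2 q).
Definition levi_Zb : CFun := fun q =>
  alpha2 * beta1 * (uz1 q * uzb2 q) - alpha1 * beta2 * (uzb1 q * uz2 q).

Lemma C1_at_levi (q : pt) : C1_at levi q.
Proof. unfold levi. solve_C1_at. Qed.
Lemma C1_at_levi_Z (q : pt) : C1_at levi_Z q.
Proof. unfold levi_Z, Cminus. solve_C1_at. Qed.
#[local] Hint Resolve C1_at_levi C1_at_levi_Z : C1_at.

Lemma app_levi (X : VF) (q : pt) : app X levi q =
  alpha2 * (app X uz1 q * uzb1 q + uz1 q * app X uzb1 q)
  + alpha1 * (app X uz2 q * uzb2 q + uz2 q * app X uzb2 q).
Proof. unfold levi. rewrite app_plus, !app_scal, !app_mult by solve_C1_at. reflexivity. Qed.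

Lemma app_levi_Z (X : VF) (q : pt) : app X levi_Z q =
  alpha2 * beta1 * (app X uzb1 q * uz2 q + uzb1 q * app X uz2 q)
  - alpha1 * beta2 * (app X uz1 q * uzb2 q + uz1 q * app X uzb2 q).
Proof.
  unfold levi_Z, Cminus. rewrite app_plus, app_opp, !app_scal, !app_mult by solve_C1_at.
  reflexivity.
Qed.

Lemma app_Z_levi (q : pt) : app Z levi q = levi_Z q.
Proof. rewrite app_levi, app_uz1, app_uzb1, app_uz2, app_uzb2. frame_rw. unfold levi_Z. ring. Qed.
Lemma app_Zb_levi (q : pt) : app Zb levi q = levi_Zb q.
Proof. rewrite app_levi, app_uz1, app_uzb1, app_uz2, app_uzb2. frame_rw. unfold levi_Zb. ring. Qed.
Lemma app_Zb_levi_Z (q : pt) : app Zb levi_Z q =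
  alpha2 * beta1 * (beta1 * uzb2 q * uz2 q - alpha2 * uzb1 q * uzb1 q)
  - alpha1 * beta2 * (alpha1 * uzb2 q * uzb2 q - beta2 * uz1 q * uzb1 q).
Proof. rewrite app_levi_Z, app_uz1, app_uzb1, app_uz2, app_uzb2. frame_rw. ring. Qed.

Lemma bracket_Z_Zb_vz1 (q : pt) : vz1 (bracket Z Zb) q = alpha2 * uzb1 q.
Proof.
  unfold bracket; cbn [vz1 vz2 vzb1 vzb2]. frame_rw.
  rewrite app_const, app_uz2. frame_rw. ring.
Qed.
Lemma bracket_Z_Zb_vz2 (q : pt) : vz2 (bracket Z Zb) q = alpha1 * uzb2 q.
Proof.
  unfold bracket; cbn [vz1 vz2 vzb1 vzb2]. frame_rw.
  rewrite app_const, app_opp, app_uz1. frame_rw. ring.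
Qed.
Lemma bracket_Z_Zb_vzb1 (q : pt) : vzb1 (bracket Z Zb) q = - (alpha2 * uz1 q).
Proof.
  unfold bracket; cbn [vz1 vz2 vzb1 vzb2]. frame_rw.
  rewrite app_const, app_uzb2. frame_rw. ring.
Qed.
Lemma bracket_Z_Zb_vzb2 (q : pt) : vzb2 (bracket Z Zb) q = - (alpha1 * uz2 q).
Proof.
  unfold bracket; cbn [vz1 vz2 vzb1 vzb2]. frame_rw.
  rewrite app_const, app_opp, app_uzb1. frame_rw. ring.
Qed.

Lemma hE_levi : hE A1 B1 A2 B2 = levi.
Proof.
  apply functional_extensionality; intros q. unfold hE, Defs.d1.
  rewrite theta_Z, theta_Zb, !app_const. unfold ev.
  rewrite bracket_Z_Zb_vz1, bracket_Z_Zb_vz2, bracket_Z_Zb_vzb1, bracket_Z_Zb_vzb2. frame_rw.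
  unfold levi. apply Ceq; unfold Re, Im; simpl; field.
Qed.

Definition levi_R (q : pt) : R :=
  ((A2 + B2) / 2 * ((A1 * coord q 0) ^ 2 + (B1 * coord q 1) ^ 2) +
   (A1 + B1) / 2 * ((A2 * coord q 2) ^ 2 + (B2 * coord q 3) ^ 2))%R.

Lemma levi_RtoC (q : pt) : levi q = RtoC (levi_R q).
Proof.
  unfold levi, levi_R, uz1, uzb1, uz2, uzb2, rlinear, z1, z2, alpha1, alpha2, beta1, beta2.
  apply Ceq; unfold Re, Im; simpl; field.
Qed.

Lemma levi_R_pos (q : pt) : M q -> (0 < levi_R q)%R.
Proof.
  intros Hq. apply onM_iff in Hq. unfold levi_R.
  unfold ellipsoid_form, ellipsoid_bilin in Hq.
  destruct q as [[[x1 y1] x2] y2]; cbn [coord fst snd] in *.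
  assert (Hm : (0 < Rmin (Rmin A1 B1) (Rmin A2 B2))%R) by (repeat apply Rmin_pos; assumption).
  pose proof (Rmin_l (Rmin A1 B1) (Rmin A2 B2)); pose proof (Rmin_r (Rmin A1 B1) (Rmin A2 B2)).
  pose proof (Rmin_l A1 B1); pose proof (Rmin_r A1 B1).
  pose proof (Rmin_l A2 B2); pose proof (Rmin_r A2 B2).
  set (m := Rmin (Rmin A1 B1) (Rmin A2 B2)) in *.
  assert (m * (A1 * x1 * x1) <= (A1 * x1) ^ 2)%R by nra.
  assert (m * (B1 * y1 * y1) <= (B1 * y1) ^ 2)%R by nra.
  assert (m * (A2 * x2 * x2) <= (A2 * x2) ^ 2)%R by nra.
  assert (m * (B2 * y2 * y2) <= (B2 * y2) ^ 2)%R by nra.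
  assert (0 <= (A1 * x1) ^ 2 + (B1 * y1) ^ 2)%R by nra.
  assert (0 <= (A2 * x2) ^ 2 + (B2 * y2) ^ 2)%R by nra.
  nra.
Qed.

Lemma levi_neq0 (q : pt) : M q -> levi q <> 0.
Proof.
  intros Hq H. rewrite levi_RtoC in H. apply (f_equal Re) in H. simpl in H.
  pose proof (levi_R_pos q Hq). lra.
Qed.

Lemma Cconj_levi (q : pt) : Cconj (levi q) = levi q.
Proof. rewrite levi_RtoC. apply Cconj_RtoC. Qed.

Lemma levi_Zb_conj (q : pt) : levi_Zb q = Cconj (levi_Z q).
Proof.
  unfold levi_Zb, levi_Z, alpha1, alpha2, beta1, beta2.
  rewrite Cminus_conj, !Cmult_conj, !Cconj_RtoC, Cconj_uz1, Cconj_uzb1, Cconj_uz2, Cconj_uzb2.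
  ring.
Qed.

Lemma Ci_sq : Ci * Ci = -1.
Proof. apply Ceq; simpl; ring. Qed.

Lemma Ci_mult_eq_0 (w : C) : Ci * w = 0 -> w = 0.
Proof.
  intros H. transitivity (- (Ci * Ci) * w); [rewrite Ci_sq; ring|].
  transitivity (- Ci * (Ci * w)); [ring|]. rewrite H. ring.
Qed.

Lemma Ci_mult_eq_m1 (s : C) : 1 + Ci * s = 0 -> s = Ci.
Proof.
  intros H. transitivity (- (Ci * Ci) * s); [rewrite Ci_sq; ring|].
  transitivity (Ci - Ci * (1 + Ci * s)); [ring|]. rewrite H. ring.
Qed.

Section StructureEquations.
Variables (T : VF) (th1 om : Form).
Hypotheses (HTC : VF_C1 T)
  (HTreal : forall q, vzb1 T q = Cconj (vz1 T q) /\ vzb2 T q = Cconj (vz2 T q))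
  (HTM : forall q, M q ->
     app T u q = 0 /\ ev th T q = 1 /\ Defs.d1 th T Z q = 0 /\ Defs.d1 th T Zb q = 0).

Lemma Z_theta_T_add_theta_bracket (q : pt) :
  app Z (ev th T) q + ev th (bracket T Z) q =
  Ci * (alpha1 * uz2 q * vzb1 T q - alpha2 * uz1 q * vzb2 T q).
Proof.
  unfold ev, bracket; cbn [vz1 vz2 vzb1 vzb2]. frame_rw.
  rewrite !app_plus, !app_mult by solve_C1_at.
  rewrite !app_const, !app_opp, !app_uz1, !app_uz2, ?app_uzb1, ?app_uzb2. frame_rw.
  field.
Qed.

Lemma reeb_field_relation (q : pt) : M q ->
  alpha1 * uzb2 q * vz1 T q - alpha2 * uzb1 q * vz2 T q = 0.
Proof.
  intros Hq. destruct (HTM q Hq) as (_ & _ & Hd & _). destruct (HTreal q) as [R1 R2].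
  unfold Defs.d1 in Hd. rewrite theta_Z, app_const in Hd.
  assert (H : Ci * (alpha1 * uz2 q * vzb1 T q - alpha2 * uz1 q * vzb2 T q) = 0).
  { rewrite <- Z_theta_T_add_theta_bracket. transitivity (- (0 - app Z (ev th T) q -
      ev th (bracket T Z) q)); [ring | rewrite Hd; ring]. }
  apply Ci_mult_eq_0, (f_equal Cconj) in H. unfold alpha1, alpha2 in *.
  rewrite Cminus_conj, !Cmult_conj, R1, R2, !Cconj_conj, Cconj_uz1, Cconj_uz2, !Cconj_RtoC in H.
  exact H.
Qed.

Lemma reeb_holomorphic_part (q : pt) : M q -> uz1 q * vz1 T q + uz2 q * vz2 T q = Ci.
Proof.
  intros Hq. destruct (HTM q Hq) as (Hu & Hth & _). apply Ci_mult_eq_m1.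
  rewrite <- Hth. unfold ev. frame_rw.
  transitivity (Ci / 2 * app T u q); [rewrite app_uE; field | rewrite Hu; ring].
Qed.

Lemma reeb_field (q : pt) : M q ->
  levi q * vz1 T q = Ci * alpha2 * uzb1 q /\ levi q * vz2 T q = Ci * alpha1 * uzb2 q.
Proof.
  intros Hq.
  pose proof (reeb_holomorphic_part q Hq) as Hs. pose proof (reeb_field_relation q Hq) as Hc.
  unfold levi. split.
  - transitivity (alpha2 * uzb1 q * (uz1 q * vz1 T q + uz2 q * vz2 T q)
      + uz2 q * (alpha1 * uzb2 q * vz1 T q - alpha2 * uzb1 q * vz2 T q)); [ring|].
    rewrite Hs, Hc. ring.
  - transitivity (alpha1 * uzb2 q * (uz1 q * vz1 T q + uz2 q * vz2 T q)
      - uz1 q * (alpha1 * uzb2 q * vz1 T q - alpha2 * uzb1 q * vz2 T q)); [ring|].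
    rewrite Hs, Hc. ring.
Qed.

Lemma reeb_field_conj (q : pt) : M q ->
  levi q * vzb1 T q = - Ci * alpha2 * uz1 q /\ levi q * vzb2 T q = - Ci * alpha1 * uz2 q.
Proof.
  intros Hq. destruct (reeb_field q Hq) as [H1 H2]. destruct (HTreal q) as [R1 R2].
  apply (f_equal Cconj) in H1, H2. unfold alpha1, alpha2 in *.
  rewrite !Cmult_conj, Cconj_levi, !Cconj_RtoC, Cconj_uzb1 in H1.
  rewrite !Cmult_conj, Cconj_levi, !Cconj_RtoC, Cconj_uzb2 in H2.
  rewrite R1, R2, H1, H2. split; apply Ceq; simpl; ring.
Qed.

Lemma bracket_Z_Zb_eq_T (f : Form) (q : pt) : M q ->
  ev f (bracket Z Zb) q = - Ci * levi q * ev f T q.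
Proof.
  intros Hq. destruct (reeb_field q Hq) as [H1 H2], (reeb_field_conj q Hq) as [H3 H4].
  unfold ev. rewrite bracket_Z_Zb_vz1, bracket_Z_Zb_vz2, bracket_Z_Zb_vzb1, bracket_Z_Zb_vzb2.
  transitivity (- Ci * (fz1 f q * (levi q * vz1 T q) + fz2 f q * (levi q * vz2 T q)
    + fzb1 f q * (levi q * vzb1 T q) + fzb2 f q * (levi q * vzb2 T q))); [|ring].
  rewrite H1, H2, H3, H4. transitivity (- (Ci * Ci) * (fz1 f q * (alpha2 * uzb1 q)
    + fz2 f q * (alpha1 * uzb2 q) - fzb1 f q * (alpha2 * uz1 q) - fzb2 f q * (alpha1 * uz2 q)));
    [rewrite Ci_sq | ]; ring.
Qed.

Hypotheses (Hth1C : Form_C1 th1)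
  (Hth1M : forall q, M q -> ev th1 T q = 0 /\ ev th1 Z q = 1 /\ ev th1 Zb q = 0).

Lemma C1_at_ev_Z (f : Form) (q : pt) : Form_C1 f -> C1_at (ev f Z) q.
Proof. intros Hf. unfold ev. frame_rw. solve_C1_at. Qed.
Lemma C1_at_ev_Zb (f : Form) (q : pt) : Form_C1 f -> C1_at (ev f Zb) q.
Proof. intros Hf. unfold ev. frame_rw. solve_C1_at. Qed.
Lemma C1_at_ev_T (f : Form) (q : pt) : Form_C1 f -> C1_at (ev f T) q.
Proof. intros Hf. unfold ev. solve_C1_at. Qed.

Lemma dtheta1_Z_Zb (q : pt) : M q -> Defs.d1 th1 Z Zb q = 0.
Proof.
  intros Hq. unfold Defs.d1.
  rewrite bracket_Z_Zb_eq_T, (proj1 (Hth1M q Hq)) by exact Hq.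
  rewrite (app_eq_0_of_const_on_M Z (ev th1 Zb) 0 q (C1_at_ev_Zb th1 q Hth1C)
             (fun x Hx => proj2 (proj2 (Hth1M x Hx))) Hq (app_Z_uE q)).
  rewrite (app_eq_0_of_const_on_M Zb (ev th1 Z) 1 q (C1_at_ev_Z th1 q Hth1C)
             (fun x Hx => proj1 (proj2 (Hth1M x Hx))) Hq (app_Zb_uE q)).
  ring.
Qed.

Variable Atau : CFun.
Hypotheses (HomC : Form_C1 om)
  (HTW : forall q, M q ->
    (forall X Y, (X, Y) = (Z, Zb) \/ (X, Y) = (Z, T) \/ (X, Y) = (Zb, T) ->
       Defs.d1 th1 X Y q = wedge th1 om X Y q + wedge th (fscale Atau (fconj th1)) X Y q) /\
    (forall X, X = Z \/ X = Zb \/ X = T ->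
       ev om X q + ev (fconj om) X q = app X (hE A1 B1 A2 B2) q / hE A1 B1 A2 B2 q)).

Lemma ev_fconj_Z (f : Form) (q : pt) : ev (fconj f) Z q = Cconj (ev f Zb q).
Proof.
  unfold ev, fconj; cbn [fz1 fz2 fzb1 fzb2]. frame_rw.
  rewrite !Cplus_conj, !Cmult_conj, Copp_conj, Cconj_uzb2, Cconj_uzb1, Cconj_RtoC. ring.
Qed.

Lemma ev_fconj_Zb (f : Form) (q : pt) : ev (fconj f) Zb q = Cconj (ev f Z q).
Proof.
  unfold ev, fconj; cbn [fz1 fz2 fzb1 fzb2]. frame_rw.
  rewrite !Cplus_conj, !Cmult_conj, Copp_conj, Cconj_uz1, Cconj_uz2, Cconj_RtoC. ring.
Qed.

Lemma om_Zb (q : pt) : M q -> ev om Zb q = 0.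
Proof.
  intros Hq. pose proof (proj1 (HTW q Hq) Z Zb (or_introl eq_refl)) as H.
  rewrite dtheta1_Z_Zb in H by exact Hq. unfold wedge in H.
  rewrite theta_Z, theta_Zb in H. destruct (Hth1M q Hq) as (_ & H1 & H2).
  rewrite H1, H2 in H. transitivity (- (0 - (1 * ev om Zb q - 0 * ev om Z q
    + (0 * ev (fscale Atau (fconj th1)) Zb q - 0 * ev (fscale Atau (fconj th1)) Z q))));
    [ring | rewrite <- H; ring].
Qed.

Lemma om_Z (q : pt) : M q -> ev om Z q * levi q = levi_Z q.
Proof.
  intros Hq. pose proof (proj2 (HTW q Hq) Z (or_introl eq_refl)) as H.
  rewrite hE_levi, app_Z_levi, ev_fconj_Z, om_Zb, Cconj_RtoC in H by exact Hq.
  transitivity ((ev om Z q + 0) * levi q); [ring|].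
  rewrite H. field. apply levi_neq0, Hq.
Qed.

Lemma levi_mult_app_tangent (X : VF) (f h : CFun) (q : pt) :
  C1_at f q -> C1_at h q -> (forall x, M x -> levi x * f x = h x) -> M q -> app X u q = 0 ->
  levi q * app X f q = app X h q - app X levi q * f q.
Proof.
  intros Hf Hh Hfh Hq HX.
  assert (H : app X (fun x => levi x * f x + - h x) q = 0).
  { apply (app_eq_0_of_const_on_M X _ 0 q); try assumption.
    - solve_C1_at.
    - intros x Hx. rewrite (Hfh x Hx). ring. }
  rewrite app_plus, app_opp, app_mult in H by solve_C1_at.
  transitivity ((app X levi q * f q + levi q * app X f q + - app X h q)
    + app X h q - app X levi q * f q); [ring | rewrite H; ring].
Qed.

Lemma app_Z_reeb (q : pt) : M q ->
  levi q * app Z (vz1 T) q = Ci * alpha2 * (alpha1 * uz2 q) - levi_Z q * vz1 T q /\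
  levi q * app Z (vz2 T) q = Ci * alpha1 * (alpha2 * - uz1 q) - levi_Z q * vz2 T q /\
  levi q * app Z (vzb1 T) q = - Ci * alpha2 * (beta1 * uz2 q) - levi_Z q * vzb1 T q /\
  levi q * app Z (vzb2 T) q = - Ci * alpha1 * (beta2 * - uz1 q) - levi_Z q * vzb2 T q.
Proof.
  intros Hq.
  assert (HZ : forall (f h : CFun), C1_at f q -> C1_at h q ->
            (forall x, M x -> levi x * f x = h x) ->
            levi q * app Z f q = app Z h q - levi_Z q * f q).
  { intros f h Hf Hh Hfh. rewrite <- app_Z_levi.
    apply levi_mult_app_tangent; [exact Hf | exact Hh | exact Hfh | exact Hq | apply app_Z_uE]. }
  repeat split.
  - rewrite (HZ (vz1 T) (fun x => Ci * alpha2 * uzb1 x)); try solve_C1_at;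
      [| intros x Hx; apply (reeb_field x Hx)].
    rewrite app_scal, app_uzb1 by solve_C1_at. frame_rw. ring.
  - rewrite (HZ (vz2 T) (fun x => Ci * alpha1 * uzb2 x)); try solve_C1_at;
      [| intros x Hx; apply (reeb_field x Hx)].
    rewrite app_scal, app_uzb2 by solve_C1_at. frame_rw. ring.
  - rewrite (HZ (vzb1 T) (fun x => - Ci * alpha2 * uz1 x)); try solve_C1_at;
      [| intros x Hx; apply (reeb_field_conj x Hx)].
    rewrite app_scal, app_uz1 by solve_C1_at. frame_rw. ring.
  - rewrite (HZ (vzb2 T) (fun x => - Ci * alpha1 * uz2 x)); try solve_C1_at;
      [| intros x Hx; apply (reeb_field_conj x Hx)].
    rewrite app_scal, app_uz2 by solve_C1_at. frame_rw. ring.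
Qed.

(* [ring] on [C] does not know [Ci * Ci = -1]: split into real and imaginary parts. *)
Ltac ring_Ci q :=
  unfold levi, levi_Z, levi_Zb;
  generalize (uz1 q) (uzb1 q) (uz2 q) (uzb2 q) alpha1 alpha2 beta1 beta2;
  intros; apply Ceq; simpl; ring.

Definition bracket_ZT_Z (q : pt) : C :=
  2 * Ci * alpha1 * alpha2 * levi q
  - Ci * (alpha1 * alpha1 * beta2 * uzb2 q * uzb2 q + alpha2 * alpha2 * beta1 * uzb1 q * uzb1 q).
Definition bracket_ZT_Zb (q : pt) : C :=
  - Ci * alpha1 * alpha2 * (beta1 * uz2 q * uz2 q + beta2 * uz1 q * uz1 q).

Lemma bracket_Z_T_components (q : pt) : M q ->
  levi q * levi q * vz1 (bracket Z T) q = bracket_ZT_Z q * uz2 q /\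
  levi q * levi q * vz2 (bracket Z T) q = bracket_ZT_Z q * - uz1 q /\
  levi q * levi q * vzb1 (bracket Z T) q = bracket_ZT_Zb q * uzb2 q /\
  levi q * levi q * vzb2 (bracket Z T) q = bracket_ZT_Zb q * - uzb1 q.
Proof.
  intros Hq. destruct (reeb_field q Hq) as [T1 T2], (reeb_field_conj q Hq) as [T3 T4].
  destruct (app_Z_reeb q Hq) as (D1 & D2 & D3 & D4).
  unfold bracket; cbn [vz1 vz2 vzb1 vzb2]. frame_rw.
  rewrite app_uz2, app_opp, app_uz1, !app_const. repeat split.
  - transitivity (levi q * (levi q * app Z (vz1 T) q)
      - levi q * (beta2 * (levi q * vz2 T q) + alpha2 * (levi q * vzb2 T q))); [ring|].
    rewrite D1; transitivity (levi q * (Ci * alpha2 * (alpha1 * uz2 q))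
      - levi_Z q * (levi q * vz1 T q) - levi q * (beta2 * (levi q * vz2 T q)
      + alpha2 * (levi q * vzb2 T q))); [ring|].
    rewrite T1, T2, T4. unfold bracket_ZT_Z. ring_Ci q.
  - transitivity (levi q * (levi q * app Z (vz2 T) q)
      + levi q * (beta1 * (levi q * vz1 T q) + alpha1 * (levi q * vzb1 T q))); [ring|].
    rewrite D2; transitivity (levi q * (Ci * alpha1 * (alpha2 * - uz1 q))
      - levi_Z q * (levi q * vz2 T q) + levi q * (beta1 * (levi q * vz1 T q)
      + alpha1 * (levi q * vzb1 T q))); [ring|].
    rewrite T1, T2, T3. unfold bracket_ZT_Z. ring_Ci q.
  - transitivity (levi q * (levi q * app Z (vzb1 T) q)); [ring|].
    rewrite D3. transitivity (levi q * (- Ci * alpha2 * (beta1 * uz2 q))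
      - levi_Z q * (levi q * vzb1 T q)); [ring|].
    rewrite T3. unfold bracket_ZT_Zb. ring_Ci q.
  - transitivity (levi q * (levi q * app Z (vzb2 T) q)); [ring|].
    rewrite D4. transitivity (levi q * (- Ci * alpha1 * (beta2 * - uz1 q))
      - levi_Z q * (levi q * vzb2 T q)); [ring|].
    rewrite T4. unfold bracket_ZT_Zb. ring_Ci q.
Qed.

Lemma bracket_Z_T_in_frame (f : Form) (q : pt) : M q ->
  levi q * levi q * ev f (bracket Z T) q
  = bracket_ZT_Z q * ev f Z q + bracket_ZT_Zb q * ev f Zb q.
Proof.
  intros Hq. destruct (bracket_Z_T_components q Hq) as (E1 & E2 & E3 & E4).
  unfold ev. frame_rw.
  transitivity (fz1 f q * (levi q * levi q * vz1 (bracket Z T) q)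
    + fz2 f q * (levi q * levi q * vz2 (bracket Z T) q)
    + fzb1 f q * (levi q * levi q * vzb1 (bracket Z T) q)
    + fzb2 f q * (levi q * levi q * vzb2 (bracket Z T) q)); [ring|].
  rewrite E1, E2, E3, E4. ring.
Qed.

Lemma dtheta1_Z_T (q : pt) : M q -> Defs.d1 th1 Z T q = - ev th1 (bracket Z T) q.
Proof.
  intros Hq. unfold Defs.d1.
  rewrite (app_eq_0_of_const_on_M Z (ev th1 T) 0 q (C1_at_ev_T th1 q Hth1C)
             (fun x Hx => proj1 (Hth1M x Hx)) Hq (app_Z_uE q)).
  rewrite (app_eq_0_of_const_on_M T (ev th1 Z) 1 q (C1_at_ev_Z th1 q Hth1C)
             (fun x Hx => proj1 (proj2 (Hth1M x Hx))) Hq (proj1 (HTM q Hq))).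
  ring.
Qed.

Lemma om_T (q : pt) : M q -> levi q * levi q * ev om T q = - bracket_ZT_Z q.
Proof.
  intros Hq. pose proof (proj1 (HTW q Hq) Z T (or_intror (or_introl eq_refl))) as H.
  unfold wedge in H. rewrite !ev_fscale, ev_fconj_Z, theta_Z, dtheta1_Z_T in H by exact Hq.
  destruct (Hth1M q Hq) as (H0 & H1 & H2). rewrite H0, H1, H2, Cconj_RtoC in H.
  rewrite (proj1 (proj2 (HTM q Hq))) in H.
  pose proof (bracket_Z_T_in_frame th1 q Hq) as HB. rewrite H1, H2 in HB.
  transitivity (- (levi q * levi q * - (1 * ev om T q - 0 * ev om Z q +
      (0 * (Atau q * ev (fconj th1) T q) - 1 * (Atau q * 0))))); [ring|].
  rewrite <- H. transitivity (- (levi q * levi q * ev th1 (bracket Z T) q)); [ring|].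
  rewrite HB. ring.
Qed.

Variable Rc : pt -> R.
Hypothesis HW : IsWebsterCurv A1 B1 A2 B2 T th1 om Rc.

Lemma dom_Z_Zb (q : pt) : M q -> Defs.d1 om Z Zb q = RtoC (Rc q) * levi q.
Proof.
  intros Hq. destruct (HW q Hq) as [beta Hb]. specialize (Hb Z Zb (or_introl eq_refl)).
  unfold wedge in Hb. rewrite theta_Z, theta_Zb, ev_fconj_Z, ev_fconj_Zb, hE_levi in Hb.
  destruct (Hth1M q Hq) as (_ & H1 & H2). rewrite H1, H2, !Cconj_RtoC in Hb.
  transitivity (Defs.d1 om Z Zb q - RtoC (Rc q) * levi q * (1 * 1 - 0 * 0)
    + RtoC (Rc q) * levi q); [ring|].
  rewrite Hb. ring.
Qed.

Lemma app_Zb_om_Z (q : pt) : M q ->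
  levi q * app Zb (ev om Z) q = app Zb levi_Z q - levi_Zb q * ev om Z q.
Proof.
  intros Hq. rewrite <- app_Zb_levi.
  apply levi_mult_app_tangent; try solve_C1_at.
  - apply C1_at_ev_Z, HomC.
  - intros x Hx. rewrite <- (om_Z x Hx). ring.
  - exact Hq.
  - apply app_Zb_uE.
Qed.

Definition webster_numerator (q : pt) : C :=
  2 * alpha1 * alpha2 * levi q * levi q * levi q
  - levi q * levi q * (alpha2 * beta1 * beta1 * uz2 q * uzb2 q
                       + alpha1 * beta2 * beta2 * uz1 q * uzb1 q)
  + levi q * levi_Z q * levi_Zb q.

Lemma webster_curvature_eq (q : pt) : M q ->
  RtoC (Rc q) * (levi q * levi q * levi q * levi q) = webster_numerator q.
Proof.
  intros Hq. pose proof (dom_Z_Zb q Hq) as HY. unfold Defs.d1 in HY.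
  rewrite bracket_Z_Zb_eq_T in HY by exact Hq.
  rewrite (app_eq_0_of_const_on_M Z (ev om Zb) 0 q (C1_at_ev_Zb om q HomC) om_Zb Hq (app_Z_uE q))
    in HY.
  pose proof (app_Zb_om_Z q Hq) as Hw. rewrite app_Zb_levi_Z in Hw.
  transitivity (levi q * levi q * levi q * (RtoC (Rc q) * levi q)); [ring|].
  rewrite <- HY.
  transitivity (- (levi q * levi q) * (levi q * app Zb (ev om Z) q)
    + Ci * (levi q * levi q) * (levi q * levi q * ev om T q)); [ring|].
  rewrite Hw, om_T by exact Hq.
  transitivity (- (levi q * levi q) * (alpha2 * beta1 * (beta1 * uzb2 q * uz2 q
    - alpha2 * uzb1 q * uzb1 q) - alpha1 * beta2 * (alpha1 * uzb2 q * uzb2 q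
    - beta2 * uz1 q * uzb1 q)) + levi q * levi_Zb q * (ev om Z q * levi q)
    + Ci * (levi q * levi q) * - bracket_ZT_Z q); [ring|].
  rewrite om_Z by exact Hq. unfold webster_numerator, bracket_ZT_Z. ring_Ci q.
Qed.

Lemma webster_numerator_RtoC (q : pt) : webster_numerator q =
  RtoC (let L := levi_R q in let a1 := ((A1 + B1) / 2)%R in let a2 := ((A2 + B2) / 2)%R in
        let b1 := ((A1 - B1) / 2)%R in let b2 := ((A2 - B2) / 2)%R in
        2 * a1 * a2 * L * L * L
        - L * L * (a2 * b1 * b1 * ((A2 * coord q 2) ^ 2 + (B2 * coord q 3) ^ 2)
                   + a1 * b2 * b2 * ((A1 * coord q 0) ^ 2 + (B1 * coord q 1) ^ 2))
        + L * (Re (levi_Z q) ^ 2 + Im (levi_Z q) ^ 2))%R.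
Proof.
  unfold webster_numerator. rewrite levi_Zb_conj, levi_RtoC.
  generalize (levi_Z q) as E; intros [er ei].
  unfold levi_R, uz1, uzb1, uz2, uzb2, rlinear, z1, z2, alpha1, alpha2, beta1, beta2.
  destruct q as [[[x1 y1] x2] y2]. apply Ceq; simpl; field.
Qed.

Lemma webster_curvature_pos (q : pt) : M q -> (0 < Rc q)%R.
Proof.
  intros Hq. pose proof (webster_curvature_eq q Hq) as H.
  rewrite levi_RtoC, webster_numerator_RtoC, <- !RtoC_mult in H. apply RtoC_inj in H.
  cbv zeta in H.
  apply (Rlt_0_of_quartic_identity ((A1 + B1) / 2) ((A2 + B2) / 2) ((A1 - B1) / 2) ((A2 - B2) / 2)
    ((A1 * coord q 0) ^ 2 + (B1 * coord q 1) ^ 2) ((A2 * coord q 2) ^ 2 + (B2 * coord q 3) ^ 2)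
    (Re (levi_Z q) ^ 2 + Im (levi_Z q) ^ 2) (levi_R q)); try nra.
  - reflexivity.
  - apply levi_R_pos, Hq.
Qed.

End StructureEquations.
End Ellipsoid.

Theorem mainTheorem4 (A1 B1 A2 B2 : R) :
  (0 < A1)%R -> (0 < B1)%R -> (0 < A2)%R -> (0 < B2)%R ->
  forall (T : VF) (th1 om : Form) (Rc : pt -> R),
    IsReeb A1 B1 A2 B2 T ->
    IsCoframe A1 B1 A2 B2 T th1 ->
    IsTWconn A1 B1 A2 B2 T th1 om ->
    IsWebsterCurv A1 B1 A2 B2 T th1 om Rc ->
    forall p : pt, onM A1 B1 A2 B2 p -> (0 < Rc p)%R.
Proof.
  intros HA1 HB1 HA2 HB2 T th1 om Rc (HTC & HTreal & HTM) (Hth1C & Hth1M) (HomC & Atau & HTW) HW.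
  exact (webster_curvature_pos A1 B1 A2 B2 HA1 HB1 HA2 HB2 T th1 om HTC HTreal HTM Hth1C Hth1M
           Atau HomC HTW Rc HW).
Qed.
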